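(* Let $f:\Sigma\to\mathbb{S}^4_1$ be a non-isotropic conformal marginally trapped immersion with flat normal bundle, and, on a simply connected coordinate domain, let $z$, $c$, $\xi$, $h$, $u$ and the matrices $A^t$ be as in the context. Then for every $t\in\mathbb R$ the one-form $\alpha_t=A^t\,dz+\overline{A^t}\,d\bar z$ is $\mathfrak{so}(4,1)$-valued, coincides for $t=0$ with the Maurer–Cartan form $F^{-1}dF$ of the adapted frame $F$, and satisfies the Maurer–Cartan equation $d\alpha_t+\frac12[\alpha_t\wedge\alpha_t]=0$.
   Context: $\mathbb{R}^5_1$ is $\mathbb{R}^5$ with $\langle x,y\rangle=x_0y_0+x_1y_1+x_2y_2+x_3y_3-x_4y_4$ (complex-bilinearly extended), standard basis $e_0,\dots,e_4$, $\mathbb{S}^4_1=\{\langle x,x\rangle=1\}$; future pointing: $\langle X,e_4\rangle<0$. $f$ conformal spacelike immersion, $\langle f_z,f_{\bar z}\rangle=e^{2u}$; positively oriented orthonormal normal frame $\{N_1,N_2\}$ ($\langle N_1,N_1\rangle=1,\langle N_2,N_2\rangle=-1,\langle N_1,N_2\rangle=0$, $N_2$ future pointing, orientation of $\nu(f)$); $\xi_1=\langle f_{zz},N_1\rangle$, $\xi_2=-\langle f_{zz},N_2\rangle$; $\mathbf H$: $f_{z\bar z}=-e^{2u}f+e^{2u}\mathbf H$; marginally trapped: $\langle\mathbf H,\mathbf H\rangle=0$, $\mathbf H=h(N_1+N_2)$; non-isotropic: $\xi_1^2-\xi_2^2\ne0$. Setup: since the normal bundle is flat, choose $\{N_1,N_2\}$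 $\nabla^\perp$-parallel (i.e. $\langle\partial_zN_1,N_2\rangle=0$) and a coordinate $z$ with $q=(\xi_1-\xi_2)dz^2=c\,dz^2$, $c\in\mathbb R\setminus\{0\}$; write $\xi_2=\xi$, $\xi_1=\xi+c$. Let $F=(f,F_1,F_2,N_1,N_2)\in SO_+(4,1)$ (columns) with $f_z=\frac{e^u}{\sqrt2}(F_1-iF_2)$. For $t\in\mathbb R$ put $h^t=h+\frac{t}{2c}$, $a^t_1=\frac{e^{-u}(\xi+c)+e^uh^t}{\sqrt2}$, $b^t_1=\frac{e^{-u}(\xi+c)-e^uh^t}{\sqrt2}$, $a^t_2=\frac{e^{-u}\xi+e^uh^t}{\sqrt2}$, $b^t_2=\frac{e^{-u}\xi-e^uh^t}{\sqrt2}$, and let $A^t$ be the $5\times5$ matrix with rows $(0,\,-\tfrac{e^u}{\sqrt2},\,i\tfrac{e^u}{\sqrt2},\,0,\,0)$, $(\tfrac{e^u}{\sqrt2},\,0,\,iu_z,\,-a^t_1,\,a^t_2)$, $(-i\tfrac{e^u}{\sqrt2},\,-iu_z,\,0,\,-ib^t_1,\,ib^t_2)$, $(0,\,a^t_1,\,ib^t_1,\,0,\,0)$, $(0,\,a^t_2,\,ib^t_2,\,0,\,0)$. Then $A^0=F^{-1}F_z$. *)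

From Stdlib Require Import Reals Lra Lia.
Open Scope R_scope.

Record Cx := mkC { cre : R; cim : R }.
Definition RtoC (r : R) : Cx := mkC r 0.
Definition C0 : Cx := mkC 0 0.
Definition Ci : Cx := mkC 0 1.
Definition Cadd (a b : Cx) : Cx := mkC (cre a + cre b) (cim a + cim b).
Definition Copp (a : Cx) : Cx := mkC (- cre a) (- cim a).
Definition Csub (a b : Cx) : Cx := Cadd a (Copp b).
Definition Cmul (a b : Cx) : Cx :=
  mkC (cre a * cre b - cim a * cim b) (cre a * cim b + cim a * cre b).
Definition Cconj (a : Cx) : Cx := mkC (cre a) (- cim a).
Definition Cscal (r : R) (a : Cx) : Cx := mkC (r * cre a) (r * cim a).

(* vectors in R^5 (resp. C^5) are functions on indices 0..4 *)
Definition VR := nat -> R.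
Definition VC := nat -> Cx.
Definition sum5 (g : nat -> R) : R := g 0%nat + g 1%nat + g 2%nat + g 3%nat + g 4%nat.
Definition Csum5 (g : nat -> Cx) : Cx :=
  Cadd (g 0%nat) (Cadd (g 1%nat) (Cadd (g 2%nat) (Cadd (g 3%nat) (g 4%nat)))).
(* signature: eta i = 1 for i = 0..3, eta 4 = -1 ; J = diag(eta) *)
Definition eta (i : nat) : R := if Nat.eqb i 4 then -1 else 1.
Definition inner5 (a b : VR) : R := sum5 (fun i => eta i * a i * b i).
Definition cinner (a b : VC) : Cx := Csum5 (fun i => Cscal (eta i) (Cmul (a i) (b i))).
Definition VtoC (a : VR) : VC := fun i => RtoC (a i).
Definition Vconj (a : VC) : VC := fun i => Cconj (a i).

Fixpoint detn (n : nat) (M : nat -> nat -> R) : R :=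
  match n with
  | O => 1
  | S m => sum_f_R0 (fun j => (-1) ^ j * M O j *
             detn m (fun a b => M (S a) (if Nat.ltb b j then b else S b))) m
  end.

(* SO_+(4,1): F^T J F = J, det F = 1, time-orientation preserving (F_44 > 0) *)
Definition SOp41 (F : nat -> nat -> R) : Prop :=
  (forall i j, (i < 5)%nat -> (j < 5)%nat ->
     sum5 (fun k => eta k * F k i * F k j) = (if Nat.eqb i j then eta i else 0))
  /\ detn 5 F = 1 /\ F 4%nat 4%nat > 0.

Definition is_so41 (X : nat -> nat -> R) : Prop :=
  forall i j, (i < 5)%nat -> (j < 5)%nat -> eta i * X i j + eta j * X j i = 0.

Definition Dx (g : R -> R -> R) (x y l : R) : Prop := derivable_pt_lim (fun s => g s y) x l.
Definition Dy (g : R -> R -> R) (x y l : R) : Prop := derivable_pt_lim (fun s => g x s) y l.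

(* d/dz = (d/dx - i d/dy)/2 ,  d/dzbar = (d/dx + i d/dy)/2 *)
Definition HasDz (g : R -> R -> Cx) (x y : R) (w : Cx) : Prop :=
  exists ax ay bx bY,
    Dx (fun a b => cre (g a b)) x y ax /\ Dy (fun a b => cre (g a b)) x y ay /\
    Dx (fun a b => cim (g a b)) x y bx /\ Dy (fun a b => cim (g a b)) x y bY /\
    w = mkC ((ax + bY) / 2) ((bx - ay) / 2).
Definition HasDzb (g : R -> R -> Cx) (x y : R) (w : Cx) : Prop :=
  exists ax ay bx bY,
    Dx (fun a b => cre (g a b)) x y ax /\ Dy (fun a b => cre (g a b)) x y ay /\
    Dx (fun a b => cim (g a b)) x y bx /\ Dy (fun a b => cim (g a b)) x y bY /\
    w = mkC ((ax - bY) / 2) ((bx + ay) / 2).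

Definition HasDzV (g : R -> R -> VR) (x y : R) (w : VC) : Prop :=
  forall i, (i < 5)%nat -> HasDz (fun a b => RtoC (g a b i)) x y (w i).
Definition HasDzCV (g : R -> R -> VC) (x y : R) (w : VC) : Prop :=
  forall i, (i < 5)%nat -> HasDz (fun a b => g a b i) x y (w i).
Definition HasDzbCV (g : R -> R -> VC) (x y : R) (w : VC) : Prop :=
  forall i, (i < 5)%nat -> HasDzb (fun a b => g a b i) x y (w i).

Definition openU (U : R -> R -> Prop) : Prop :=
  forall x y, U x y -> exists r, r > 0 /\
    forall x' y', Rabs (x' - x) < r -> Rabs (y' - y) < r -> U x' y'.

Definition cont2 (U : R -> R -> Prop) (g : R -> R -> R) : Prop :=
  forall x y, U x y -> forall eps, eps > 0 -> exists d, d > 0 /\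
    forall x' y', Rabs (x' - x) < d -> Rabs (y' - y) < d -> Rabs (g x' y' - g x y) < eps.

Fixpoint Ck (k : nat) (U : R -> R -> Prop) (g : R -> R -> R) : Prop :=
  match k with
  | O => cont2 U g
  | S k' => cont2 U g /\ exists gx gy : R -> R -> R,
      (forall x y, U x y -> Dx g x y (gx x y) /\ Dy g x y (gy x y)) /\
      Ck k' U gx /\ Ck k' U gy
  end.
Definition smooth (U : R -> R -> Prop) (g : R -> R -> R) : Prop := forall k, Ck k U g.

Definition Fmat (f F1 F2 N1 N2 : R -> R -> VR) (x y : R) : nat -> nat -> R :=
  fun i j => match j with
             | O => f x y i
             | S O => F1 x y i
             | S (S O) => F2 x y i
             | S (S (S O)) => N1 x y i
             | _ => N2 x y i
             end.

Definition Amat (t c u h : R) (uz xi : Cx) : nat -> nat -> Cx :=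
  let e := exp u / sqrt 2 in
  let ht := h + t / (2 * c) in
  let a1 := Cscal (/ sqrt 2) (Cadd (Cscal (exp (- u)) (Cadd xi (RtoC c))) (RtoC (exp u * ht))) in
  let b1 := Cscal (/ sqrt 2) (Csub (Cscal (exp (- u)) (Cadd xi (RtoC c))) (RtoC (exp u * ht))) in
  let a2 := Cscal (/ sqrt 2) (Cadd (Cscal (exp (- u)) xi) (RtoC (exp u * ht))) in
  let b2 := Cscal (/ sqrt 2) (Csub (Cscal (exp (- u)) xi) (RtoC (exp u * ht))) in
  fun i j =>
    match i, j with
    | O, S O => RtoC (- e)
    | O, S (S O) => Cmul Ci (RtoC e)
    | S O, O => RtoC e
    | S O, S (S O) => Cmul Ci uz
    | S O, S (S (S O)) => Copp a1
    | S O, S (S (S (S O))) => a2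
    | S (S O), O => Copp (Cmul Ci (RtoC e))
    | S (S O), S O => Copp (Cmul Ci uz)
    | S (S O), S (S (S O)) => Copp (Cmul Ci b1)
    | S (S O), S (S (S (S O))) => Cmul Ci b2
    | S (S (S O)), S O => a1
    | S (S (S O)), S (S O) => Cmul Ci b1
    | S (S (S (S O))), S O => a2
    | S (S (S (S O))), S (S O) => Cmul Ci b2
    | _, _ => C0
    end.

Definition Afield (t c : R) (u h : R -> R -> R) (uz xi : R -> R -> Cx)
  : R -> R -> nat -> nat -> Cx :=
  fun x y => Amat t c (u x y) (h x y) (uz x y) (xi x y).

(* alpha(d/dx) = A + conj A = 2 Re A ; alpha(d/dy) = i A - i conj A = -2 Im A *)
Definition alpha_x (A : nat -> nat -> Cx) : nat -> nat -> R := fun i j => 2 * cre (A i j).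
Definition alpha_y (A : nat -> nat -> Cx) : nat -> nat -> R := fun i j => - (2 * cim (A i j)).

Definition commAAbar (A : nat -> nat -> Cx) (i j : nat) : Cx :=
  Csum5 (fun k => Csub (Cmul (A i k) (Cconj (A k j))) (Cmul (Cconj (A i k)) (A k j))).

(* The adapted frame F = (f, F1, F2, N1, N2) is pseudo-orthonormal, so each column of
   F_x and F_y is determined by its inner products with the columns, and since F^-1 dF is
   so(4,1)-valued only the entries below the diagonal need computing.  They come from
   f_x = 2E F1, f_y = 2E F2 (E = e^u / sqrt 2), from <f_zz, N1> = xi + c, <f_zz, N2> = -xi,
   f_zzbar = e^2u (-f + h (N1 + N2)) and <dN1, N2> = 0; this gives F_z = F A^0.  The
   Maurer-Cartan equation of A^0 is the symmetry of the mixed partials of F, F being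
   invertible.  Finally A^t - A^0 = t/(2c) E M with M constant, and this shift changes
   neither the so(4,1) condition nor the Maurer-Cartan expression. *)

From Pilot Require Import Defs.
From Stdlib Require Import Reals Lra Lia.
From mathcomp Require all_boot all_algebra Rstruct.
(* Stdlib's [Reals] also defines [Dx]; re-import [Defs] so that its [Dx] wins. *)
Import Defs.
Open Scope R_scope.

(** * Derivatives *)

(* Stdlib's rules are stated for [(f + g)%F] etc.; these lambda-pattern forms are what [derive] matches. *)
Lemma dpl_const (k x : R) : derivable_pt_lim (fun _ => k) x 0.
Proof. apply derivable_pt_lim_const. Qed.

Lemma dpl_plus (f g : R -> R) (x lf lg : R) : derivable_pt_lim f x lf -> derivable_pt_lim g x lg ->
  derivable_pt_lim (fun s => f s + g s) x (lf + lg).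
Proof. intros; now apply derivable_pt_lim_plus. Qed.

Lemma dpl_minus (f g : R -> R) (x lf lg : R) : derivable_pt_lim f x lf -> derivable_pt_lim g x lg ->
  derivable_pt_lim (fun s => f s - g s) x (lf - lg).
Proof. intros; now apply derivable_pt_lim_minus. Qed.

Lemma dpl_mult (f g : R -> R) (x lf lg : R) : derivable_pt_lim f x lf -> derivable_pt_lim g x lg ->
  derivable_pt_lim (fun s => f s * g s) x (lf * g x + f x * lg).
Proof. intros; now apply derivable_pt_lim_mult. Qed.

Lemma dpl_opp (f : R -> R) (x lf : R) : derivable_pt_lim f x lf ->
  derivable_pt_lim (fun s => - f s) x (- lf).
Proof. intros; now apply derivable_pt_lim_opp. Qed.

Lemma dpl_exp (f : R -> R) (x lf : R) : derivable_pt_lim f x lf ->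
  derivable_pt_lim (fun s => exp (f s)) x (exp (f x) * lf).
Proof.
  intros H. apply (derivable_pt_lim_comp f exp x lf (exp (f x))); auto.
  apply derivable_pt_lim_exp.
Qed.

Lemma dpl_eq (f : R -> R) (x l l' : R) : derivable_pt_lim f x l -> l = l' -> derivable_pt_lim f x l'.
Proof. now intros ? <-. Qed.

Lemma dpl_local (f g : R -> R) (x l r : R) : r > 0 -> (forall s, Rabs (s - x) < r -> f s = g s) ->
  derivable_pt_lim f x l -> derivable_pt_lim g x l.
Proof.
  intros Hr E H eps Heps. destruct (H eps Heps) as [d Hd].
  assert (Hm : 0 < Rmin d r) by (apply Rmin_pos; [apply (cond_pos d)|lra]).
  exists (mkposreal _ Hm). intros h Hh Hh'. simpl in Hh'.
  rewrite <- (E (x + h)), <- (E x).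
  - apply Hd; auto. apply Rlt_le_trans with (1 := Hh'). apply Rmin_l.
  - rewrite Rminus_diag, Rabs_R0; lra.
  - replace (x + h - x) with h by ring. apply Rlt_le_trans with (1 := Hh'). apply Rmin_r.
Qed.

Ltac derive :=
  lazymatch goal with
  | |- derivable_pt_lim (fun _ => ?k) _ _ => apply dpl_const
  | |- derivable_pt_lim (fun s => @?f s + @?g s) _ _ => eapply dpl_plus; [derive|derive]
  | |- derivable_pt_lim (fun s => @?f s - @?g s) _ _ => eapply dpl_minus; [derive|derive]
  | |- derivable_pt_lim (fun s => @?f s * @?g s) _ _ => eapply dpl_mult; [derive|derive]
  | |- derivable_pt_lim (fun s => - @?f s) _ _ => eapply dpl_opp; derive
  | |- derivable_pt_lim (fun s => exp (@?f s)) _ _ => eapply dpl_exp; derive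
  | |- derivable_pt_lim (fun s => @?f s / ?k) _ _ =>
      unfold Rdiv; eapply dpl_mult; [derive|apply dpl_const]
  | |- _ => eassumption
  end.

Ltac derive_eq := eapply dpl_eq; [derive|cbv beta; unfold Rdiv; ring].

Lemma dpl_scaled (g : R -> R) (k x l : R) : k <> 0 ->
  derivable_pt_lim (fun s => k * g s) x l -> derivable_pt_lim g x (l / k).
Proof.
  intros Hk H. apply (dpl_local (fun s => / k * (k * g s)) g x _ 1); [lra| |].
  - intros s _. field. exact Hk.
  - eapply dpl_eq; [apply dpl_mult; [apply dpl_const|exact H]|cbv beta; field; exact Hk].
Qed.

Lemma dpl_locally_const (g : R -> R) (x0 r k l : R) : r > 0 ->
  (forall s, Rabs (s - x0) < r -> g s = k) -> derivable_pt_lim g x0 l -> l = 0.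
Proof.
  intros Hr E H. apply (uniqueness_limite g x0); [exact H|].
  apply (dpl_local (fun _ => k) g x0 0 r Hr); [intros; symmetry; auto|apply dpl_const].
Qed.

(** * Partial derivatives on an open planar domain *)

Section PlanarPartials.
Variable U : R -> R -> Prop.
Hypothesis HU : openU U.

Lemma Dx_local (g g' : R -> R -> R) (x y l : R) : U x y ->
  (forall a b, U a b -> g a b = g' a b) -> Dx g x y l -> Dx g' x y l.
Proof.
  intros Hxy E. destruct (HU x y Hxy) as [r [Hr Hr']].
  apply (dpl_local (fun s => g s y) (fun s => g' s y) x l r Hr). intros s Hs. apply E, Hr'; auto.
  rewrite Rminus_diag, Rabs_R0; lra.
Qed.

Lemma Dy_local (g g' : R -> R -> R) (x y l : R) : U x y ->
  (forall a b, U a b -> g a b = g' a b) -> Dy g x y l -> Dy g' x y l.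
Proof.
  intros Hxy E. destruct (HU x y Hxy) as [r [Hr Hr']].
  apply (dpl_local (fun s => g x s) (fun s => g' x s) y l r Hr). intros s Hs. apply E, Hr'; auto.
  rewrite Rminus_diag, Rabs_R0; lra.
Qed.

Lemma cont2_local (g g' : R -> R -> R) :
  (forall a b, U a b -> g a b = g' a b) -> cont2 U g -> cont2 U g'.
Proof.
  intros E Hg x y Hxy eps Heps.
  destruct (HU x y Hxy) as [r [Hr Hr']]. destruct (Hg x y Hxy eps Heps) as [d [Hd H]].
  exists (Rmin d r). split; [now apply Rmin_pos|].
  intros x' y' Hx' Hy'.
  assert (Ix : Rabs (x' - x) < d /\ Rabs (x' - x) < r)
    by (split; eapply Rlt_le_trans; eauto; [apply Rmin_l|apply Rmin_r]).
  assert (Iy : Rabs (y' - y) < d /\ Rabs (y' - y) < r)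
    by (split; eapply Rlt_le_trans; eauto; [apply Rmin_l|apply Rmin_r]).
  rewrite <- !E by (auto; apply Hr'; tauto). apply H; tauto.
Qed.

Lemma Ck_local (k : nat) (g g' : R -> R -> R) :
  (forall a b, U a b -> g a b = g' a b) -> Ck k U g -> Ck k U g'.
Proof.
  destruct k as [|k]; simpl; [apply cont2_local|].
  intros E [Hc [gx [gy [HD Hk]]]]. split; [exact (cont2_local g g' E Hc)|].
  exists gx, gy. split; auto. intros a b Hab.
  split; [apply (Dx_local g)|apply (Dy_local g)]; auto; apply HD; auto.
Qed.

Lemma smooth_partials (g : R -> R -> R) : smooth U g ->
  exists gx gy, (forall a b, U a b -> Dx g a b (gx a b) /\ Dy g a b (gy a b)) /\
    smooth U gx /\ smooth U gy.
Proof.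
  intros Hg. destruct (Hg 1%nat) as [_ [gx [gy [HD _]]]].
  exists gx, gy. split; [exact HD|split; intros k].
  - destruct (Hg (S k)) as [_ [gx' [gy' [HD' [Hk _]]]]].
    apply (Ck_local k gx'); auto. intros a b Hab.
    apply (uniqueness_limite (fun s => g s b) a); [apply HD'|apply HD]; auto.
  - destruct (Hg (S k)) as [_ [gx' [gy' [HD' [_ Hk]]]]].
    apply (Ck_local k gy'); auto. intros a b Hab.
    apply (uniqueness_limite (fun s => g a s) b); [apply HD'|apply HD]; auto.
Qed.
Lemma openU_line_x (x y : R) : U x y ->
  exists r, r > 0 /\ forall s, Rabs (s - x) < r -> U s y.
Proof.
  intros Hxy. destruct (HU x y Hxy) as [r [Hr H]]. exists r; split; auto.
  intros s Hs. apply H; auto. rewrite Rminus_diag, Rabs_R0; lra.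
Qed.

Lemma openU_line_y (x y : R) : U x y ->
  exists r, r > 0 /\ forall s, Rabs (s - y) < r -> U x s.
Proof.
  intros Hxy. destruct (HU x y Hxy) as [r [Hr H]]. exists r; split; auto.
  intros s Hs. apply H; auto. rewrite Rminus_diag, Rabs_R0; lra.
Qed.


(* Schwarz: apply the mean value theorem twice to the second difference on a small square. *)
Lemma mixed_partials_eq (g gx gy gxy gyx : R -> R -> R) (x y : R) : U x y ->
  (forall a b, U a b -> Dx g a b (gx a b) /\ Dy g a b (gy a b) /\
                        Dy gx a b (gxy a b) /\ Dx gy a b (gyx a b)) ->
  cont2 U gxy -> cont2 U gyx -> gxy x y = gyx x y.
Proof.
  intros Hxy HD C1 C2.
  destruct (Req_dec (gxy x y) (gyx x y)) as [e|ne]; auto. exfalso.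
  set (d := Rabs (gxy x y - gyx x y)).
  assert (Hd : d > 0) by (apply Rabs_pos_lt; lra).
  destruct (HU x y Hxy) as [r [Hr Hr']].
  destruct (C1 x y Hxy (d/2)) as [d1 [Hd1 H1]]; [lra|].
  destruct (C2 x y Hxy (d/2)) as [d2 [Hd2 H2]]; [lra|].
  set (hh := Rmin r (Rmin d1 d2) / 2).
  assert (Hm : 0 < Rmin r (Rmin d1 d2)) by (repeat apply Rmin_pos; lra).
  pose proof (Rmin_l r (Rmin d1 d2)). pose proof (Rmin_r r (Rmin d1 d2)).
  pose proof (Rmin_l d1 d2). pose proof (Rmin_r d1 d2).
  assert (Hh : 0 < hh < r /\ hh < d1 /\ hh < d2) by (unfold hh; lra).
  assert (InU : forall s t, x <= s <= x + hh -> y <= t <= y + hh -> U s t).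
  { intros s t Hs Ht. apply Hr'; apply Rabs_def1; lra. }
  destruct (MVT_cor2 (fun s => g s (y + hh) - g s y) (fun s => gx s (y + hh) - gx s y) x (x + hh))
    as [s1 [E1 Hs1]]; [lra| |].
  { intros c Hc. apply dpl_minus; apply (HD c); apply InU; lra. }
  destruct (MVT_cor2 (fun t => gx s1 t) (fun t => gxy s1 t) y (y + hh)) as [t1 [E2 Ht1]]; [lra| |].
  { intros c Hc. apply (HD s1 c); apply InU; lra. }
  destruct (MVT_cor2 (fun t => g (x + hh) t - g x t) (fun t => gy (x + hh) t - gy x t) y (y + hh))
    as [t2 [E3 Ht2]]; [lra| |].
  { intros c Hc. apply dpl_minus; apply (HD _ c); apply InU; lra. }
  destruct (MVT_cor2 (fun s => gy s t2) (fun s => gyx s t2) x (x + hh)) as [s2 [E4 Hs2]]; [lra| |].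
  { intros c Hc. apply (HD c t2); apply InU; lra. }
  assert (Eq : gxy s1 t1 = gyx s2 t2).
  { replace (x + hh - x) with hh in * by ring. replace (y + hh - y) with hh in * by ring.
    apply Rmult_eq_reg_r with (hh * hh); nra. }
  assert (A1 : Rabs (gxy s1 t1 - gxy x y) < d / 2) by (apply H1; apply Rabs_def1; lra).
  assert (A2 : Rabs (gyx s2 t2 - gyx x y) < d / 2) by (apply H2; apply Rabs_def1; lra).
  rewrite Eq in A1. unfold d in *.
  revert A1 A2. unfold Rabs. repeat destruct Rcase_abs; lra.
Qed.

Definition second_partials (g gx gy gxy : R -> R -> R) : Prop :=
  forall a b, U a b -> Dx g a b (gx a b) /\ Dy g a b (gy a b) /\
                       Dy gx a b (gxy a b) /\ Dx gy a b (gxy a b).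

Lemma smooth_second_partials (g : R -> R -> R) : smooth U g ->
  exists gx gy gxy, second_partials g gx gy gxy /\ smooth U gx /\ smooth U gy.
Proof.
  intros Hg.
  destruct (smooth_partials g Hg) as [gx [gy [HD [Sx Sy]]]].
  destruct (smooth_partials gx Sx) as [gxx [gxy [HDx [_ Sxy]]]].
  destruct (smooth_partials gy Sy) as [gyx [gyy [HDy [Syx _]]]].
  exists gx, gy, gxy. split; [|auto].
  intros a b Hab.
  assert (E : gxy a b = gyx a b).
  { apply (mixed_partials_eq g gx gy gxy gyx); [exact Hab| |exact (Sxy 0%nat)|exact (Syx 0%nat)].
    intros a' b' H'. repeat split; try apply HD; try apply HDx; try apply HDy; auto. }
  repeat split; try apply HD; try apply HDx; auto. rewrite E; apply HDy; auto.
Qed.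

Lemma second_partials_const (k : R) :
  second_partials (fun _ _ => k) (fun _ _ => 0) (fun _ _ => 0) (fun _ _ => 0).
Proof. intros a b _; unfold Dx, Dy; split; [|split; [|split]]; apply dpl_const. Qed.

Lemma second_partials_opp (g gx gy gxy : R -> R -> R) :
  second_partials g gx gy gxy ->
  second_partials (fun a b => - g a b) (fun a b => - gx a b) (fun a b => - gy a b)
    (fun a b => - gxy a b).
Proof.
  intros G a b Hab. destruct (G a b Hab) as [g1 [g2 [g3 g4]]]. unfold Dx, Dy in *.
  repeat split; derive.
Qed.

Lemma second_partials_exp (g gx gy gxy : R -> R -> R) :
  second_partials g gx gy gxy ->
  second_partials (fun a b => exp (g a b)) (fun a b => exp (g a b) * gx a b)
    (fun a b => exp (g a b) * gy a b)
    (fun a b => exp (g a b) * gy a b * gx a b + exp (g a b) * gxy a b).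
Proof.
  intros G a b Hab. destruct (G a b Hab) as [g1 [g2 [g3 g4]]]. unfold Dx, Dy in *.
  repeat split; derive_eq.
Qed.

Lemma second_partials_mult (g gx gy gxy k kx ky kxy : R -> R -> R) :
  second_partials g gx gy gxy -> second_partials k kx ky kxy ->
  second_partials (fun a b => g a b * k a b) (fun a b => gx a b * k a b + g a b * kx a b)
    (fun a b => gy a b * k a b + g a b * ky a b)
    (fun a b => gxy a b * k a b + gx a b * ky a b + gy a b * kx a b + g a b * kxy a b).
Proof.
  intros G K a b Hab. destruct (G a b Hab) as [g1 [g2 [g3 g4]]].
  destruct (K a b Hab) as [k1 [k2 [k3 k4]]]. unfold Dx, Dy in *.
  repeat split; derive_eq.
Qed.

Definition mixed_partials_commute (G : R -> R -> R) (x y : R) : Prop :=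
  forall (Gx Gy : R -> R -> R) (l1 l2 : R),
    (forall a b, U a b -> Dx G a b (Gx a b)) -> (forall a b, U a b -> Dy G a b (Gy a b)) ->
    Dy Gx x y l1 -> Dx Gy x y l2 -> l1 = l2.

Lemma second_partials_commute (g gx gy gxy : R -> R -> R) (x y : R) :
  second_partials g gx gy gxy -> U x y -> mixed_partials_commute g x y.
Proof.
  intros H Hxy Gx Gy l1 l2 H1 H2 H3 H4.
  assert (E1 : forall a b, U a b -> Gx a b = gx a b).
  { intros a b Hab; apply (uniqueness_limite (fun s => g s b) a); [apply H1|apply H]; auto. }
  assert (E2 : forall a b, U a b -> Gy a b = gy a b).
  { intros a b Hab; apply (uniqueness_limite (fun s => g a s) b); [apply H2|apply H]; auto. }
  apply (Dy_local Gx gx) in H3; auto. apply (Dx_local Gy gy) in H4; auto.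
  transitivity (gxy x y).
  - apply (uniqueness_limite (fun s => gx x s) y); [exact H3|apply H; auto].
  - apply (uniqueness_limite (fun s => gy s y) x); [apply H; auto|exact H4].
Qed.

Lemma mixed_partials_commute_local (g g' : R -> R -> R) (x y : R) :
  (forall a b, U a b -> g a b = g' a b) ->
  mixed_partials_commute g x y -> mixed_partials_commute g' x y.
Proof.
  intros E H Gx Gy l1 l2 H1 H2. apply (H Gx Gy); intros a b Hab.
  - apply (Dx_local g'); auto. intros; symmetry; auto.
  - apply (Dy_local g'); auto. intros; symmetry; auto.
Qed.
End PlanarPartials.

(** * Vectors and pseudo-orthonormal frames in R^5_1 *)

Lemma fin5_ind (P : nat -> Prop) : P 0%nat -> P 1%nat -> P 2%nat -> P 3%nat -> P 4%nat ->
  forall i, (i < 5)%nat -> P i.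
Proof. intros. do 5 (destruct i as [|i]; auto). lia. Qed.

Lemma choice5 {T : Type} (P : nat -> T -> Prop) : (forall i, (i < 5)%nat -> exists l, P i l) ->
  exists v : nat -> T, forall i, (i < 5)%nat -> P i (v i).
Proof.
  intros H.
  destruct (H 0%nat ltac:(lia)) as [l0 H0]. destruct (H 1%nat ltac:(lia)) as [l1 H1].
  destruct (H 2%nat ltac:(lia)) as [l2 H2]. destruct (H 3%nat ltac:(lia)) as [l3 H3].
  destruct (H 4%nat ltac:(lia)) as [l4 H4].
  exists (fun i => match i with 0 => l0 | 1 => l1 | 2 => l2 | 3 => l3 | _ => l4 end)%nat.
  apply fin5_ind; assumption.
Qed.

Lemma choice5x5 {T : Type} (P : nat -> nat -> T -> Prop) :
  (forall i j, (i < 5)%nat -> (j < 5)%nat -> exists l, P i j l) ->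
  exists v : nat -> nat -> T, forall i j, (i < 5)%nat -> (j < 5)%nat -> P i j (v i j).
Proof.
  intros H.
  destruct (choice5 (fun i g => forall j, (j < 5)%nat -> P i j (g j))) as [v Hv].
  - intros i Hi. apply choice5. intros j Hj. apply H; auto.
  - exists v. intros; apply Hv; auto.
Qed.

Lemma inner5_sym (a b : VR) : inner5 a b = inner5 b a.
Proof. unfold inner5, sum5; ring. Qed.

Lemma inner5_ext_l (v v' w : VR) : (forall i, (i < 5)%nat -> v i = v' i) ->
  inner5 v w = inner5 v' w.
Proof. intros H. unfold inner5, sum5. rewrite !H by lia. reflexivity. Qed.

Lemma inner5_scaled_l (k : R) (v w z : VR) : (forall i, (i < 5)%nat -> v i = k * w i) ->
  inner5 v z = k * inner5 w z.
Proof.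
  intros H. rewrite (inner5_ext_l v (fun i => k * w i)) by exact H. unfold inner5, sum5; ring.
Qed.

Lemma inner5_comb_r (p q : R) (w v v' : VR) :
  inner5 w (fun i => p * v i + q * v' i) = p * inner5 w v + q * inner5 w v'.
Proof. unfold inner5, sum5; ring. Qed.

Lemma cinner_VtoC (r s v : VR) :
  cinner (fun i => mkC (r i) (s i)) (VtoC v) = mkC (inner5 r v) (inner5 s v).
Proof. unfold cinner, Csum5, inner5, sum5, Cscal, Cmul, Cadd; simpl. f_equal; ring. Qed.

Lemma eta_sq (k : nat) : eta k * eta k = 1.
Proof. unfold eta; destruct (Nat.eqb k 4); ring. Qed.

Lemma dpl_sum5_mult (A B : nat -> R -> R) (a b : nat -> R) (x : R) :
  (forall k, (k < 5)%nat -> derivable_pt_lim (A k) x (a k)) ->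
  (forall k, (k < 5)%nat -> derivable_pt_lim (B k) x (b k)) ->
  derivable_pt_lim (fun s => sum5 (fun k => A k s * B k s)) x
    (sum5 (fun k => a k * B k x + A k x * b k)).
Proof.
  intros HA HB. unfold sum5.
  pose proof (HA 0%nat ltac:(lia)). pose proof (HA 1%nat ltac:(lia)). pose proof (HA 2%nat ltac:(lia)).
  pose proof (HA 3%nat ltac:(lia)). pose proof (HA 4%nat ltac:(lia)).
  pose proof (HB 0%nat ltac:(lia)). pose proof (HB 1%nat ltac:(lia)). pose proof (HB 2%nat ltac:(lia)).
  pose proof (HB 3%nat ltac:(lia)). pose proof (HB 4%nat ltac:(lia)).
  eapply dpl_eq; [derive|reflexivity].
Qed.

Lemma dpl_inner5 (A B : R -> VR) (a b : VR) (x : R) :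
  (forall i, (i < 5)%nat -> derivable_pt_lim (fun s => A s i) x (a i)) ->
  (forall i, (i < 5)%nat -> derivable_pt_lim (fun s => B s i) x (b i)) ->
  derivable_pt_lim (fun s => inner5 (A s) (B s)) x (inner5 a (B x) + inner5 (A x) b).
Proof.
  intros HA HB. unfold inner5.
  eapply dpl_eq; [apply (dpl_sum5_mult (fun k s => eta k * A s k) (fun k s => B s k)
                                       (fun k => eta k * a k) b)|unfold sum5; cbv beta; ring].
  - intros k Hk. cbv beta. eapply dpl_eq; [apply dpl_mult; [apply dpl_const|apply HA; auto]|cbv beta; ring].
  - exact HB.
Qed.

Definition DxV (A : R -> R -> VR) (a b : R) (v : VR) : Prop :=
  forall i, (i < 5)%nat -> Dx (fun a b => A a b i) a b (v i).
Definition DyV (A : R -> R -> VR) (a b : R) (v : VR) : Prop :=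
  forall i, (i < 5)%nat -> Dy (fun a b => A a b i) a b (v i).

Lemma Dx_inner5 (U : R -> R -> Prop) (A B : R -> R -> VR) (g : R -> R -> R) (Ax Bx : VR) (a b l : R) :
  openU U -> U a b -> (forall a' b', U a' b' -> inner5 (A a' b') (B a' b') = g a' b') ->
  DxV A a b Ax -> DxV B a b Bx -> Dx g a b l -> inner5 Ax (B a b) + inner5 (A a b) Bx = l.
Proof.
  intros HU Hab E HA HB Hg. apply (uniqueness_limite (fun s => g s b) a); [|exact Hg].
  apply (Dx_local U HU (fun a b => inner5 (A a b) (B a b))); auto.
  apply (dpl_inner5 (fun s => A s b) (fun s => B s b)); auto.
Qed.

Lemma Dy_inner5 (U : R -> R -> Prop) (A B : R -> R -> VR) (g : R -> R -> R) (Ay By : VR) (a b l : R) :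
  openU U -> U a b -> (forall a' b', U a' b' -> inner5 (A a' b') (B a' b') = g a' b') ->
  DyV A a b Ay -> DyV B a b By -> Dy g a b l -> inner5 Ay (B a b) + inner5 (A a b) By = l.
Proof.
  intros HU Hab E HA HB Hg. apply (uniqueness_limite (fun s => g a s) b); [|exact Hg].
  apply (Dy_local U HU (fun a b => inner5 (A a b) (B a b))); auto.
  apply (dpl_inner5 (fun s => A a s) (fun s => B a s)); auto.
Qed.

Lemma smooth_vector_partials (U : R -> R -> Prop) (A : R -> R -> VR) (a b : R) :
  openU U -> U a b ->
  (forall i, (i < 5)%nat -> smooth U (fun x y => A x y i)) ->
  exists Ax Ay, DxV A a b Ax /\ DyV A a b Ay.
Proof.
  intros HU Hab HA.
  assert (H : forall i, (i < 5)%nat -> exists l : R * R,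
             Dx (fun a b => A a b i) a b (fst l) /\ Dy (fun a b => A a b i) a b (snd l)).
  { intros i Hi. destruct (smooth_partials U HU _ (HA i Hi)) as [gx [gy [HD _]]].
    exists (gx a b, gy a b). apply HD, Hab. }
  destruct (choice5 _ H) as [v Hv].
  exists (fun i => fst (v i)), (fun i => snd (v i)). split; intros i Hi; apply Hv; auto.
Qed.

(* [gram5 M] is [M^T J M = J], so that [J M^T J] is a left inverse of [M]. *)
Definition gram5 (M : nat -> nat -> R) : Prop :=
  forall i j, (i < 5)%nat -> (j < 5)%nat ->
    sum5 (fun k => eta k * M k i * M k j) = (if Nat.eqb i j then eta i else 0).

Lemma gram5_inj (M : nat -> nat -> R) (v : nat -> R) : gram5 M ->
  (forall i, (i < 5)%nat -> sum5 (fun m => M i m * v m) = 0) ->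
  forall l, (l < 5)%nat -> v l = 0.
Proof.
  intros HM Hv l Hl.
  assert (E : sum5 (fun m => sum5 (fun k => eta k * M k l * M k m) * v m) = 0).
  { transitivity (sum5 (fun k => eta k * M k l * sum5 (fun m => M k m * v m))).
    - unfold sum5; ring.
    - unfold sum5 at 1; cbv beta. rewrite !Hv by lia. ring. }
  unfold sum5 at 1 in E; cbv beta in E. rewrite !(HM l) in E by lia.
  unfold eta in E; do 5 (destruct l as [|l]; [simpl in E; lra|]). lia.
Qed.

Module RightInverse.
Import all_boot all_algebra Rstruct GRing.Theory.

Lemma sum5_right_inverse (F L : nat -> nat -> R) :
  (forall i j, lt i 5 -> lt j 5 ->
     sum5 (fun k => Rmult (L i k) (F k j)) = (if Nat.eqb i j then R1 else R0)) ->
  forall i j, lt i 5 -> lt j 5 ->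
     sum5 (fun k => Rmult (F i k) (L k j)) = (if Nat.eqb i j then R1 else R0).
Proof.
move=> H i j Hi Hj.
pose MF := (\matrix_(a < 5, b < 5) F a b)%R : 'M[R]_5.
pose ML := (\matrix_(a < 5, b < 5) L a b)%R : 'M[R]_5.
have delta (a b : 'I_5) : (if Nat.eqb a b then R1 else R0) = ((a == b)%:R)%R.
  case: (PeanoNat.Nat.eqb_spec a b) => [ab|ab].
    by rewrite (val_inj ab) eqxx.
  suff -> : (a == b) = false by [].
  by apply/eqP => e; apply: ab; rewrite e.
have e : (ML *m MF)%R = 1%:M%R.
  apply/matrixP => a b; rewrite !mxE !big_ord_recr big_ord0 /= !mxE add0r -delta.
  exact: H (elimT ltP (ltn_ord a)) (elimT ltP (ltn_ord b)).
have := mulmx1C e => /matrixP /(_ (Ordinal (introT ltP Hi)) (Ordinal (introT ltP Hj))).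
by rewrite !mxE !big_ord_recr big_ord0 /= !mxE add0r -delta.
Qed.
End RightInverse.

Lemma gram5_expand (M : nat -> nat -> R) (V : VR) : gram5 M ->
  forall i, (i < 5)%nat -> V i = sum5 (fun k => M i k * (eta k * inner5 (fun m => M m k) V)).
Proof.
  intros H.
  pose (L := fun k m => eta k * M m k * eta m).
  assert (HL : forall i j, (i < 5)%nat -> (j < 5)%nat ->
     sum5 (fun k => Rmult (L i k) (M k j)) = (if Nat.eqb i j then R1 else R0)).
  { intros i j Hi Hj. unfold L.
    transitivity (eta i * sum5 (fun k => eta k * M k i * M k j)); [unfold sum5; ring|].
    rewrite H by auto. destruct (Nat.eqb i j); [|ring].
    revert i Hi. apply fin5_ind; unfold eta; simpl; ring. }
  pose proof (RightInverse.sum5_right_inverse M L HL) as HR.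
  intros i Hi.
  transitivity (sum5 (fun m => sum5 (fun k => Rmult (M i k) (L k m)) * V m)).
  - unfold sum5 at 1. rewrite !HR by lia. revert i Hi. apply fin5_ind; unfold sum5; simpl; ring.
  - unfold L, inner5, sum5. ring.
Qed.

(** * Moving frames and the Maurer-Cartan equation *)

(* [connection M D k j] is the [k]-th coordinate of the vector [D j] in the frame [M]. *)
Definition connection (M : nat -> nat -> R) (D : nat -> VR) (k j : nat) : R :=
  eta k * inner5 (fun m => M m k) (D j).

Lemma connection_so41 (M : R -> nat -> nat -> R) (D : nat -> VR) (s0 r : R) : r > 0 ->
  (forall s, Rabs (s - s0) < r -> gram5 (M s)) ->
  (forall i j, (i < 5)%nat -> (j < 5)%nat -> derivable_pt_lim (fun s => M s i j) s0 (D j i)) ->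
  is_so41 (connection (M s0) D).
Proof.
  intros Hr HG HD k j Hk Hj. unfold connection.
  assert (E : inner5 (D k) (fun m => M s0 m j) + inner5 (fun m => M s0 m k) (D j) = 0).
  { apply (dpl_locally_const (fun s => inner5 (fun m => M s m k) (fun m => M s m j)) s0 r
             (if Nat.eqb k j then eta k else 0)); auto.
    - intros s Hs. exact (HG s Hs k j Hk Hj).
    - apply (dpl_inner5 (fun s m => M s m k) (fun s m => M s m j)); intros; apply HD; auto. }
  rewrite (inner5_sym (D k)) in E.
  transitivity ((eta k * eta k) * inner5 (fun m => M s0 m k) (D j) +
                (eta j * eta j) * inner5 (fun m => M s0 m j) (D k)); [ring|].
  rewrite !eta_sq. lra.
Qed.


Lemma so41_eq_lower (X Y : nat -> nat -> R) : is_so41 X -> is_so41 Y ->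
  (forall k j, (j < k < 5)%nat -> X k j = Y k j) ->
  forall k j, (k < 5)%nat -> (j < 5)%nat -> X k j = Y k j.
Proof.
  intros HX HY Hup k j Hk Hj.
  pose proof (HX k j Hk Hj) as X1. pose proof (HY k j Hk Hj) as Y1.
  destruct (Nat.lt_total j k) as [lt|[<-|lt]].
  - apply Hup; lia.
  - unfold eta in *; destruct (Nat.eqb j 4); lra.
  - rewrite (Hup j k) in X1 by lia. unfold eta in *; destruct (Nat.eqb k 4), (Nat.eqb j 4); lra.
Qed.

(* [M' = M (connection M M')] by [gram5_expand], and the connection is in so(4,1) because
   [M] stays pseudo-orthonormal; so only the entries below the diagonal need checking. *)
Lemma frame_derivative (M : R -> nat -> nat -> R) (D : nat -> VR) (X : nat -> nat -> R) (s0 r : R) :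
  r > 0 -> (forall s, Rabs (s - s0) < r -> gram5 (M s)) ->
  (forall i j, (i < 5)%nat -> (j < 5)%nat -> derivable_pt_lim (fun s => M s i j) s0 (D j i)) ->
  is_so41 X -> (forall k j, (j < k < 5)%nat -> connection (M s0) D k j = X k j) ->
  forall i j, (i < 5)%nat -> (j < 5)%nat ->
    derivable_pt_lim (fun s => M s i j) s0 (sum5 (fun k => M s0 i k * X k j)).
Proof.
  intros Hr HG HD HX Hlow i j Hi Hj.
  assert (HC := connection_so41 M D s0 r Hr HG HD).
  assert (G0 : gram5 (M s0)) by (apply HG; rewrite Rminus_diag, Rabs_R0; lra).
  eapply dpl_eq; [apply HD; auto|].
  rewrite (gram5_expand (M s0) (D j) G0 i Hi).
  unfold sum5. rewrite <- !(so41_eq_lower _ _ HC HX Hlow) by lia. reflexivity.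
Qed.

Definition mc_defect (X Y Xy Yx : nat -> nat -> R) (i j : nat) : R :=
  Yx i j - Xy i j + sum5 (fun k => X i k * Y k j - Y i k * X k j).

(* A frame [F] with [F_x = F X], [F_y = F Y] and commuting mixed partials: differentiating
   [F X] in [y] and [F Y] in [x] gives [F * mc_defect = 0], and [F] is invertible. *)
Lemma structure_equations_integrable (U : R -> R -> Prop) (F X Y : R -> R -> nat -> nat -> R)
  (Xy Yx : nat -> nat -> R) (x y : R) : U x y ->
  (forall a b, U a b -> forall i j, (i < 5)%nat -> (j < 5)%nat ->
     Dx (fun a b => F a b i j) a b (sum5 (fun k => F a b i k * X a b k j)) /\
     Dy (fun a b => F a b i j) a b (sum5 (fun k => F a b i k * Y a b k j))) ->
  (forall k j, (k < 5)%nat -> (j < 5)%nat ->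
     Dy (fun a b => X a b k j) x y (Xy k j) /\ Dx (fun a b => Y a b k j) x y (Yx k j)) ->
  (forall i j, (i < 5)%nat -> (j < 5)%nat -> mixed_partials_commute U (fun a b => F a b i j) x y) ->
  gram5 (F x y) ->
  forall i j, (i < 5)%nat -> (j < 5)%nat -> mc_defect (X x y) (Y x y) Xy Yx i j = 0.
Proof.
  intros Hxy HF HXY HMS HG i j Hi Hj. revert i Hi.
  apply (gram5_inj (F x y) (fun m => mc_defect (X x y) (Y x y) Xy Yx m j) HG).
  intros i Hi.
  assert (E : sum5 (fun k => sum5 (fun m => F x y i m * Y x y m k) * X x y k j + F x y i k * Xy k j) =
              sum5 (fun k => sum5 (fun m => F x y i m * X x y m k) * Y x y k j + F x y i k * Yx k j)).
  { apply (HMS i j Hi Hj (fun a b => sum5 (fun k => F a b i k * X a b k j))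
                         (fun a b => sum5 (fun k => F a b i k * Y a b k j)));
      try (intros a b Hab; apply HF; auto).
    - apply (dpl_sum5_mult (fun k s => F x s i k) (fun k s => X x s k j)); intros k Hk.
      + apply HF; auto.
      + apply HXY; auto.
    - apply (dpl_sum5_mult (fun k s => F s y i k) (fun k s => Y s y k j)); intros k Hk.
      + apply HF; auto.
      + apply HXY; auto. }
  unfold mc_defect, sum5 in *. lra.
Qed.

(* With [A = (X - iY)/2], [dz conj A - dzbar A + [A, conj A]] is [i/2] times the real defect. *)
Lemma complex_mc_defect (A : nat -> nat -> Cx) (rx ry ix iy : R) (i j : nat) :
  Cadd (Csub (mkC ((rx + - iy) / 2) ((- ix - ry) / 2)) (mkC ((rx - iy) / 2) ((ix + ry) / 2)))
       (commAAbar A i j) =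
  mkC 0 (mc_defect (alpha_x A) (alpha_y A) (fun _ _ => 2 * ry) (fun _ _ => - (2 * ix)) i j / 2).
Proof.
  unfold commAAbar, mc_defect, alpha_x, alpha_y, Csum5, sum5, Cadd, Csub, Copp, Cmul, Cconj.
  simpl. f_equal; field.
Qed.

Lemma HasDz_intro (g : R -> R -> Cx) (x y ax ay bx bY : R) :
  Dx (fun a b => cre (g a b)) x y ax -> Dy (fun a b => cre (g a b)) x y ay ->
  Dx (fun a b => cim (g a b)) x y bx -> Dy (fun a b => cim (g a b)) x y bY ->
  HasDz g x y (mkC ((ax + bY) / 2) ((bx - ay) / 2)).
Proof. intros; exists ax, ay, bx, bY; auto. Qed.

Lemma HasDzb_intro (g : R -> R -> Cx) (x y ax ay bx bY : R) :
  Dx (fun a b => cre (g a b)) x y ax -> Dy (fun a b => cre (g a b)) x y ay ->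
  Dx (fun a b => cim (g a b)) x y bx -> Dy (fun a b => cim (g a b)) x y bY ->
  HasDzb g x y (mkC ((ax - bY) / 2) ((bx + ay) / 2)).
Proof. intros; exists ax, ay, bx, bY; auto. Qed.

Lemma HasDz_real (g : R -> R -> R) (x y : R) (w : Cx) :
  HasDz (fun a b => RtoC (g a b)) x y w ->
  Dx g x y (2 * cre w) /\ Dy g x y (- (2 * cim w)).
Proof.
  intros [ax [ay [bx [bY [H1 [H2 [H3 [H4 ->]]]]]]]]. simpl in H3, H4.
  assert (bx = 0) by (apply (uniqueness_limite (fun _ => 0) x); [exact H3|apply dpl_const]).
  assert (bY = 0) by (apply (uniqueness_limite (fun _ => 0) y); [exact H4|apply dpl_const]).
  subst. simpl. split; [eapply dpl_eq; [exact H1|field]|eapply dpl_eq; [exact H2|field]].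
Qed.

(** * The matrices A^t *)

(* [A^t] with the conformal scale [E = e^u / sqrt 2]: [e^(-u) / sqrt 2 = 1 / (2 E)]. *)
Definition AmatE (t c E h : R) (uz xi : Cx) : nat -> nat -> Cx :=
  let ht := h + t / (2 * c) in
  let a1 := Cadd (Cscal (/ (2 * E)) (Cadd xi (RtoC c))) (RtoC (E * ht)) in
  let b1 := Csub (Cscal (/ (2 * E)) (Cadd xi (RtoC c))) (RtoC (E * ht)) in
  let a2 := Cadd (Cscal (/ (2 * E)) xi) (RtoC (E * ht)) in
  let b2 := Csub (Cscal (/ (2 * E)) xi) (RtoC (E * ht)) in
  fun i j =>
    match i, j with
    | O, S O => RtoC (- E)
    | O, S (S O) => Cmul Ci (RtoC E)
    | S O, O => RtoC E
    | S O, S (S O) => Cmul Ci uz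
    | S O, S (S (S O)) => Copp a1
    | S O, S (S (S (S O))) => a2
    | S (S O), O => Copp (Cmul Ci (RtoC E))
    | S (S O), S O => Copp (Cmul Ci uz)
    | S (S O), S (S (S O)) => Copp (Cmul Ci b1)
    | S (S O), S (S (S (S O))) => Cmul Ci b2
    | S (S (S O)), S O => a1
    | S (S (S O)), S (S O) => Cmul Ci b1
    | S (S (S (S O))), S O => a2
    | S (S (S (S O))), S (S O) => Cmul Ci b2
    | _, _ => C0
    end.

Lemma sqrt2_neq0 : sqrt 2 <> 0.
Proof. apply Rgt_not_eq, sqrt_lt_R0; lra. Qed.

Lemma exp_opp_scaled (u : R) : exp (- u) = sqrt 2 * / (2 * (exp u / sqrt 2)).
Proof.
  rewrite exp_Ropp. pose proof (exp_pos u). pose proof sqrt2_neq0.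
  transitivity (sqrt 2 * / (sqrt 2 * sqrt 2 * (exp u / sqrt 2))); [field; lra|].
  rewrite sqrt_sqrt by lra. reflexivity.
Qed.

Lemma Amat_AmatE (t c u h : R) (uz xi : Cx) (i j : nat) :
  Amat t c u h uz xi i j = AmatE t c (exp u / sqrt 2) h uz xi i j.
Proof.
  pose proof (exp_pos u). pose proof sqrt2_neq0.
  unfold Amat, AmatE. rewrite exp_opp_scaled.
  destruct i as [|[|[|[|[|i]]]]]; destruct j as [|[|[|[|[|j]]]]]; try reflexivity.
  all: unfold Cscal, Cadd, Csub, Copp, Cmul, RtoC; simpl; set (kt := t / (2 * c)); f_equal; field; lra.
Qed.

Lemma AmatE_so41 (t c E h : R) (uz xi : Cx) :
  is_so41 (alpha_x (AmatE t c E h uz xi)) /\ is_so41 (alpha_y (AmatE t c E h uz xi)).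
Proof.
  split; intros i j Hi Hj; revert i Hi; apply fin5_ind; revert j Hj; apply fin5_ind;
  unfold alpha_x, alpha_y, AmatE; simpl; unfold eta; simpl; ring.
Qed.

Lemma Amat_so41 (t c u h : R) (uz xi : Cx) :
  is_so41 (alpha_x (Amat t c u h uz xi)) /\ is_so41 (alpha_y (Amat t c u h uz xi)).
Proof.
  destruct (AmatE_so41 t c (exp u / sqrt 2) h uz xi) as [Sx Sy].
  split; intros i j Hi Hj; unfold alpha_x, alpha_y; rewrite !Amat_AmatE; [apply Sx|apply Sy]; auto.
Qed.

Definition deform_x (k j : nat) : R :=
  match k, j with
  | 1%nat, 3%nat => -2 | 1%nat, 4%nat => 2 | 3%nat, 1%nat => 2 | 4%nat, 1%nat => 2 | _, _ => 0
  end.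

Definition deform_y (k j : nat) : R :=
  match k, j with
  | 2%nat, 3%nat => -2 | 2%nat, 4%nat => 2 | 3%nat, 2%nat => 2 | 4%nat, 2%nat => 2 | _, _ => 0
  end.

Lemma AmatE_shift (t c E h : R) (uz xi : Cx) (k j : nat) :
  alpha_x (AmatE t c E h uz xi) k j = alpha_x (AmatE 0 c E h uz xi) k j + t / (2 * c) * E * deform_x k j /\
  alpha_y (AmatE t c E h uz xi) k j = alpha_y (AmatE 0 c E h uz xi) k j + t / (2 * c) * E * deform_y k j.
Proof.
  unfold alpha_x, alpha_y, AmatE, deform_x, deform_y.
  destruct k as [|[|[|[|[|k]]]]]; destruct j as [|[|[|[|[|j]]]]]; simpl; split; unfold Rdiv; ring.
Qed.

Lemma mc_defect_AmatE_shift (t c E h : R) (uz xi : Cx) (Xy Yx : nat -> nat -> R) (i j : nat) :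
  (i < 5)%nat -> (j < 5)%nat ->
  let ux := 2 * cre uz in
  let uy := - (2 * cim uz) in
  mc_defect (alpha_x (AmatE t c E h uz xi)) (alpha_y (AmatE t c E h uz xi))
    (fun k l => Xy k l + t / (2 * c) * (E * uy) * deform_x k l)
    (fun k l => Yx k l + t / (2 * c) * (E * ux) * deform_y k l) i j =
  mc_defect (alpha_x (AmatE 0 c E h uz xi)) (alpha_y (AmatE 0 c E h uz xi)) Xy Yx i j.
Proof.
  intros Hi Hj ux uy. unfold ux, uy.
  revert i Hi; apply fin5_ind; revert j Hj; apply fin5_ind.
  all: unfold mc_defect, alpha_x, alpha_y, AmatE, deform_x, deform_y, sum5; simpl.
  all: replace (0 / (2 * c)) with 0 by (unfold Rdiv; ring).
  all: set (kt := t / (2 * c)); set (kE := / (2 * E)); clearbody kt kE; field.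
Qed.

Lemma mc_defect_ext (X X' Y Y' Xy Yx : nat -> nat -> R) (i j : nat) :
  (forall k l, X k l = X' k l) -> (forall k l, Y k l = Y' k l) ->
  mc_defect X Y Xy Yx i j = mc_defect X' Y' Xy Yx i j.
Proof. intros HX HY. unfold mc_defect, sum5. rewrite !HX, !HY. reflexivity. Qed.

Lemma Amat_shift (t c u h : R) (uz xi : Cx) (k j : nat) :
  cre (Amat t c u h uz xi k j) = cre (Amat 0 c u h uz xi k j) + t / (2 * c) * (exp u / sqrt 2) * deform_x k j / 2 /\
  cim (Amat t c u h uz xi k j) = cim (Amat 0 c u h uz xi k j) - t / (2 * c) * (exp u / sqrt 2) * deform_y k j / 2.
Proof.
  rewrite !Amat_AmatE. destruct (AmatE_shift t c (exp u / sqrt 2) h uz xi k j) as [Sx Sy].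
  unfold alpha_x, alpha_y in Sx, Sy. split; lra.
Qed.

Lemma mc_defect_Amat_shift (t c u h : R) (uz xi : Cx) (Xy Yx : nat -> nat -> R) (i j : nat) :
  (i < 5)%nat -> (j < 5)%nat ->
  let E := exp u / sqrt 2 in
  mc_defect (alpha_x (Amat t c u h uz xi)) (alpha_y (Amat t c u h uz xi))
    (fun k l => Xy k l + t / (2 * c) * (E * - (2 * cim uz)) * deform_x k l)
    (fun k l => Yx k l + t / (2 * c) * (E * (2 * cre uz)) * deform_y k l) i j =
  mc_defect (alpha_x (Amat 0 c u h uz xi)) (alpha_y (Amat 0 c u h uz xi)) Xy Yx i j.
Proof.
  intros Hi Hj E.
  assert (Ex : forall t k l, alpha_x (Amat t c u h uz xi) k l = alpha_x (AmatE t c E h uz xi) k l)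
    by (intros; unfold alpha_x; rewrite Amat_AmatE; reflexivity).
  assert (Ey : forall t k l, alpha_y (Amat t c u h uz xi) k l = alpha_y (AmatE t c E h uz xi) k l)
    by (intros; unfold alpha_y; rewrite Amat_AmatE; reflexivity).
  rewrite !(mc_defect_ext _ _ _ _ _ _ i j (Ex _) (Ey _)).
  exact (mc_defect_AmatE_shift t c E h uz xi Xy Yx i j Hi Hj).
Qed.

(** * The adapted frame of the surface *)

Section Surface.
Variables (U : R -> R -> Prop)
  (f F1 F2 N1 N2 : R -> R -> VR) (u h : R -> R -> R) (xi : R -> R -> Cx) (c : R)
  (fz : R -> R -> VC) (uz : R -> R -> Cx).
Hypothesis HU : openU U.
Hypothesis Hreg : forall i, (i < 5)%nat ->
  smooth U (fun x y => f x y i) /\ smooth U (fun x y => N1 x y i) /\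
  smooth U (fun x y => N2 x y i).
Hypothesis Hu : smooth U u.
Hypothesis Hh : smooth U h.
Hypothesis Hxr : smooth U (fun x y => cre (xi x y)).
Hypothesis Hxim : smooth U (fun x y => cim (xi x y)).
Hypothesis Hfz : forall x y, U x y -> HasDzV f x y (fz x y).
Hypothesis HF12 : forall x y, U x y -> forall i, (i < 5)%nat ->
  fz x y i = Cscal (exp (u x y) / sqrt 2) (mkC (F1 x y i) (- F2 x y i)).
Hypothesis HSO : forall x y, U x y -> SOp41 (Fmat f F1 F2 N1 N2 x y).
Hypothesis Hpar : forall x y, U x y -> forall w, HasDzV N1 x y w -> cinner w (VtoC (N2 x y)) = C0.
Hypothesis Hxi : forall x y, U x y -> forall w, HasDzCV fz x y w ->
  cinner w (VtoC (N1 x y)) = Cadd (xi x y) (RtoC c) /\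
  Copp (cinner w (VtoC (N2 x y))) = xi x y.
Hypothesis Hzzb : forall x y, U x y -> forall w, HasDzbCV fz x y w -> forall i, (i < 5)%nat ->
  w i = RtoC (exp (2 * u x y) * (- f x y i + h x y * (N1 x y i + N2 x y i))).
Hypothesis Huz : forall x y, U x y -> HasDz (fun a b => RtoC (u a b)) x y (uz x y).

Definition scale (a b : R) : R := exp (u a b) / sqrt 2.
(* [u_z = (u_x - i u_y) / 2], and likewise for [f]. *)
Definition ux (a b : R) : R := 2 * cre (uz a b).
Definition uy (a b : R) : R := - (2 * cim (uz a b)).
Definition fx (a b : R) : VR := fun i => 2 * cre (fz a b i).
Definition fy (a b : R) : VR := fun i => -2 * cim (fz a b i).

Lemma scale_pos (a b : R) : 0 < scale a b.
Proof. apply Rdiv_lt_0_compat; [apply exp_pos|apply sqrt_lt_R0; lra]. Qed.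

Lemma frame_gram (a b : R) : U a b -> gram5 (Fmat f F1 F2 N1 N2 a b).
Proof. intros Hab; exact (proj1 (HSO a b Hab)). Qed.

Ltac col_index v :=
  lazymatch v with
  | f _ _ => constr:(0%nat) | F1 _ _ => constr:(1%nat) | F2 _ _ => constr:(2%nat)
  | N1 _ _ => constr:(3%nat) | N2 _ _ => constr:(4%nat)
  end.

Ltac frame_inner_simpl :=
  repeat match goal with
  | H : U ?a ?b |- context [inner5 ?A ?B] =>
      let k := col_index A in let j := col_index B in
      let G := fresh in
      assert (G : inner5 A B = if Nat.eqb k j then eta k else 0)
        by exact (frame_gram a b H k j ltac:(lia) ltac:(lia));
      simpl in G; unfold eta in G; simpl in G; rewrite G; clear G
  end.

Lemma u_partials (a b : R) : U a b -> Dx u a b (ux a b) /\ Dy u a b (uy a b).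
Proof. intros Hab. exact (HasDz_real u a b (uz a b) (Huz a b Hab)). Qed.

Lemma f_partials (a b : R) : U a b -> DxV f a b (fx a b) /\ DyV f a b (fy a b).
Proof.
  intros Hab. split; intros i Hi; destruct (HasDz_real _ a b _ (Hfz a b Hab i Hi)) as [Hx Hy].
  - exact Hx.
  - eapply dpl_eq; [exact Hy|unfold fy; ring].
Qed.

Lemma fx_fy_frame (a b : R) (i : nat) : U a b -> (i < 5)%nat ->
  fx a b i = 2 * scale a b * F1 a b i /\ fy a b i = 2 * scale a b * F2 a b i.
Proof.
  intros Hab Hi. unfold fx, fy, scale. rewrite HF12 by auto. simpl. split; ring.
Qed.

Lemma F1_F2_fx_fy (a b : R) (i : nat) : U a b -> (i < 5)%nat ->
  F1 a b i = / (2 * scale a b) * fx a b i /\ F2 a b i = / (2 * scale a b) * fy a b i.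
Proof.
  intros Hab Hi. destruct (fx_fy_frame a b i Hab Hi) as [-> ->].
  pose proof (scale_pos a b). split; field; lra.
Qed.

Lemma scale_partials (a b : R) : U a b ->
  Dx scale a b (scale a b * ux a b) /\ Dy scale a b (scale a b * uy a b).
Proof.
  intros Hab. destruct (u_partials a b Hab) as [Hx Hy]. unfold scale, Dx, Dy in *.
  split; derive_eq.
Qed.

Lemma inv_scale_exp (a b : R) : / (2 * scale a b) = sqrt 2 / 2 * exp (- u a b).
Proof.
  unfold scale. rewrite exp_Ropp. pose proof (exp_pos (u a b)). pose proof sqrt2_neq0. field. lra.
Qed.

Lemma inv_scale_partials (a b : R) : U a b ->
  Dx (fun a b => / (2 * scale a b)) a b (- ux a b * / (2 * scale a b)) /\
  Dy (fun a b => / (2 * scale a b)) a b (- uy a b * / (2 * scale a b)).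
Proof.
  intros Hab. destruct (u_partials a b Hab) as [Hx Hy]. unfold Dx, Dy in *.
  rewrite inv_scale_exp.
  split; (eapply dpl_local; [exact Rlt_0_1|intros s _; symmetry; apply inv_scale_exp|derive_eq]).
Qed.

Lemma exp_2u_scale (a b : R) : exp (2 * u a b) = 2 * scale a b * scale a b.
Proof.
  unfold scale. replace (2 * u a b) with (u a b + u a b) by ring. rewrite exp_plus.
  pose proof sqrt2_neq0.
  transitivity (sqrt 2 * sqrt 2 * (exp (u a b) / sqrt 2) * (exp (u a b) / sqrt 2)); [field; auto|].
  rewrite sqrt_sqrt by lra. reflexivity.
Qed.

Lemma inner5_fx_fy (a b : R) (v : VR) : U a b ->
  inner5 v (fx a b) = 2 * scale a b * inner5 v (F1 a b) /\
  inner5 v (fy a b) = 2 * scale a b * inner5 v (F2 a b).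
Proof.
  intros Hab. rewrite !(inner5_sym v).
  split; apply inner5_scaled_l; intros i Hi; apply (fx_fy_frame a b i Hab Hi).
Qed.

Lemma inner5_F2 (a b : R) (v : VR) : U a b ->
  inner5 (F2 a b) v = / (2 * scale a b) * inner5 (fy a b) v.
Proof. intros Hab. apply inner5_scaled_l; intros i Hi; apply (F1_F2_fx_fy a b i Hab Hi). Qed.

Lemma f_metric (a b : R) : U a b ->
  inner5 (fx a b) (fy a b) = 0 /\ inner5 (fx a b) (fx a b) = 4 * scale a b * scale a b /\
  inner5 (fy a b) (fy a b) = 4 * scale a b * scale a b.
Proof.
  intros Hab. rewrite !(proj1 (inner5_fx_fy a b _ Hab)), !(proj2 (inner5_fx_fy a b _ Hab)).
  rewrite !(inner5_sym (fx a b)), !(inner5_sym (fy a b)).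
  rewrite !(proj1 (inner5_fx_fy a b _ Hab)), !(proj2 (inner5_fx_fy a b _ Hab)).
  frame_inner_simpl. repeat split; ring.
Qed.

Lemma f_component_partials (i : nat) : (i < 5)%nat ->
  exists gx gy gxy, second_partials U (fun a b => f a b i) gx gy gxy /\ smooth U gx /\ smooth U gy /\
    forall a b, U a b -> gx a b = fx a b i /\ gy a b = fy a b i.
Proof.
  intros Hi. destruct (Hreg i Hi) as [Hf _].
  destruct (smooth_second_partials U HU _ Hf) as [gx [gy [gxy [S [Sx Sy]]]]].
  exists gx, gy, gxy. split; [exact S|split; [exact Sx|split; [exact Sy|]]].
  intros a b Hab. destruct (f_partials a b Hab) as [Px Py]. split.
  - apply (uniqueness_limite (fun s => f s b i) a); [apply S|apply Px]; auto.
  - apply (uniqueness_limite (fun s => f a s i) b); [apply S|apply Py]; auto.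
Qed.

Lemma f_second_partials (a b : R) : U a b ->
  exists fxx fxy fyy, DxV fx a b fxx /\ DyV fx a b fxy /\ DxV fy a b fxy /\ DyV fy a b fyy.
Proof.
  intros Hab.
  assert (H : forall i, (i < 5)%nat ->
    (exists l, Dx (fun a b => fx a b i) a b l) /\
    (exists l, Dy (fun a b => fx a b i) a b l /\ Dx (fun a b => fy a b i) a b l) /\
    (exists l, Dy (fun a b => fy a b i) a b l)).
  { intros i Hi. destruct (f_component_partials i Hi) as [gx [gy [gxy [S [Sx [Sy E]]]]]].
    destruct (smooth_partials U HU gx Sx) as [gxx [gxy' [Hgx _]]].
    destruct (smooth_partials U HU gy Sy) as [gyx' [gyy [Hgy _]]].
    assert (Ex : forall a b, U a b -> gx a b = fx a b i) by (intros; apply E; auto).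
    assert (Ey : forall a b, U a b -> gy a b = fy a b i) by (intros; apply E; auto).
    repeat split; [exists (gxx a b)|exists (gxy a b); split|exists (gyy a b)].
    - apply (Dx_local U HU gx); auto. apply Hgx; auto.
    - apply (Dy_local U HU gx); auto. apply S; auto.
    - apply (Dx_local U HU gy); auto. apply S; auto.
    - apply (Dy_local U HU gy); auto. apply Hgy; auto. }
  destruct (choice5 (fun i l => Dx (fun a b => fx a b i) a b l)) as [fxx Hxx]; [apply H|].
  destruct (choice5 (fun i l => Dy (fun a b => fx a b i) a b l /\ Dx (fun a b => fy a b i) a b l))
    as [fxy Hxy]; [apply H|].
  destruct (choice5 (fun i l => Dy (fun a b => fy a b i) a b l)) as [fyy Hyy]; [apply H|].
  exists fxx, fxy, fyy. repeat split; intros i Hi; try apply Hxy; auto.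
Qed.

Section AtPoint.
Variables (a b : R) (fxx fxy fyy N1x N1y N2x N2y : VR).
Hypothesis Hab : U a b.
Hypothesis Hxx : DxV fx a b fxx.
Hypothesis Hxy : DyV fx a b fxy.
Hypothesis Hyx : DxV fy a b fxy.
Hypothesis Hyy : DyV fy a b fyy.
Hypothesis HN1x : DxV N1 a b N1x.
Hypothesis HN1y : DyV N1 a b N1y.
Hypothesis HN2x : DxV N2 a b N2x.
Hypothesis HN2y : DyV N2 a b N2y.

(* Differentiate [<f_x, f_y> = 0] in [x], [|f_x|^2 = 4 E^2] in [y] and [|f_y|^2 = 4 E^2] in [x]. *)
Lemma f_second_metric :
  inner5 (F2 a b) fxx = - (2 * scale a b * uy a b) /\
  inner5 (F2 a b) fxy = 2 * scale a b * ux a b.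
Proof.
  destruct (scale_partials a b Hab) as [Sx Sy].
  assert (D4x : Dx (fun a b => 4 * scale a b * scale a b) a b (8 * scale a b * scale a b * ux a b))
    by (unfold Dx in *; derive_eq).
  assert (D4y : Dy (fun a b => 4 * scale a b * scale a b) a b (8 * scale a b * scale a b * uy a b))
    by (unfold Dy in *; derive_eq).
  assert (G1 := Dx_inner5 U fx fy (fun _ _ => 0) fxx fxy a b 0 HU Hab
                  (fun a b H => proj1 (f_metric a b H)) Hxx Hyx (dpl_const 0 a)).
  assert (G2 := Dy_inner5 U fx fx _ fxy fxy a b _ HU Hab
                  (fun a b H => proj1 (proj2 (f_metric a b H))) Hxy Hxy D4y).
  assert (G3 := Dx_inner5 U fy fy _ fxy fxy a b _ HU Hab
                  (fun a b H => proj2 (proj2 (f_metric a b H))) Hyx Hyx D4x).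
  rewrite !inner5_F2 by exact Hab.
  rewrite !(inner5_sym fxy) in G2, G3. rewrite (inner5_sym fxx) in G1.
  assert (Q1 : inner5 (fy a b) fxx = - (4 * scale a b * scale a b * uy a b)) by lra.
  assert (Q2 : inner5 (fy a b) fxy = 4 * scale a b * scale a b * ux a b) by lra.
  rewrite Q1, Q2. pose proof (scale_pos a b). split; field; lra.
Qed.

Lemma fz_partials (i : nat) : (i < 5)%nat ->
  Dx (fun a b => cre (fz a b i)) a b (fxx i / 2) /\ Dy (fun a b => cre (fz a b i)) a b (fxy i / 2) /\
  Dx (fun a b => cim (fz a b i)) a b (fxy i / -2) /\ Dy (fun a b => cim (fz a b i)) a b (fyy i / -2).
Proof.
  intros Hi.
  repeat split; apply dpl_scaled; try lra; [apply Hxx|apply Hxy|apply Hyx|apply Hyy]; auto.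
Qed.

(* [f_zz = (f_xx - f_yy - 2 i f_xy) / 4] against the normals gives [xi] and [xi + c], and
   [f_zzbar = (f_xx + f_yy) / 4] gives the mean curvature [h]. *)
Lemma second_fundamental_form :
  let E := scale a b in
  inner5 (N1 a b) fxx = 2 * (cre (xi a b) + c) + 4 * E * E * h a b /\
  inner5 (N1 a b) fxy = - (2 * cim (xi a b)) /\
  inner5 (N1 a b) fyy = 4 * E * E * h a b - 2 * (cre (xi a b) + c) /\
  inner5 (N2 a b) fxx = - (2 * cre (xi a b)) - 4 * E * E * h a b /\
  inner5 (N2 a b) fxy = 2 * cim (xi a b) /\
  inner5 (N2 a b) fyy = 2 * cre (xi a b) - 4 * E * E * h a b.
Proof.
  intros E.
  assert (Hzz : HasDzCV fz a b
    (fun i => mkC ((fxx i / 2 + fyy i / -2) / 2) ((fxy i / -2 - fxy i / 2) / 2))).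
  { intros i Hi. destruct (fz_partials i Hi) as [? [? [? ?]]]. apply HasDz_intro; auto. }
  assert (Hzzb' : HasDzbCV fz a b
    (fun i => mkC ((fxx i / 2 - fyy i / -2) / 2) ((fxy i / -2 + fxy i / 2) / 2))).
  { intros i Hi. destruct (fz_partials i Hi) as [? [? [? ?]]]. apply HasDzb_intro; auto. }
  destruct (Hxi a b Hab _ Hzz) as [X1 X2]. rewrite !cinner_VtoC in X1, X2.
  pose proof (f_equal cre X1) as R1. pose proof (f_equal cim X1) as I1.
  pose proof (f_equal cre X2) as R2. pose proof (f_equal cim X2) as I2.
  simpl in R1, I1, R2, I2.
  assert (K1 : forall v, inner5 (fun i => (fxx i / 2 + fyy i / -2) / 2) v = (inner5 v fxx - inner5 v fyy) / 4)
    by (intros; unfold inner5, sum5; field).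
  assert (K2 : forall v, inner5 (fun i => (fxy i / -2 - fxy i / 2) / 2) v = - inner5 v fxy / 2)
    by (intros; unfold inner5, sum5; field).
  assert (K3 : forall v, inner5 (fun i => (fxx i / 2 - fyy i / -2) / 2) v =
                         exp (2 * u a b) * (- inner5 v (f a b) + h a b * (inner5 v (N1 a b) + inner5 v (N2 a b)))).
  { intros v. rewrite (inner5_ext_l _ (fun i => exp (2 * u a b) * (- f a b i + h a b * (N1 a b i + N2 a b i)))).
    - unfold inner5, sum5; ring.
    - intros i Hi. exact (f_equal cre (Hzzb a b Hab _ Hzzb' i Hi)). }
  assert (Z1 : inner5 (N1 a b) fxx + inner5 (N1 a b) fyy = 8 * E * E * h a b).
  { transitivity (4 * inner5 (fun i => (fxx i / 2 - fyy i / -2) / 2) (N1 a b)); [unfold inner5, sum5; field|].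
    rewrite K3, exp_2u_scale. frame_inner_simpl. unfold E; ring. }
  assert (Z2 : inner5 (N2 a b) fxx + inner5 (N2 a b) fyy = - (8 * E * E * h a b)).
  { transitivity (4 * inner5 (fun i => (fxx i / 2 - fyy i / -2) / 2) (N2 a b)); [unfold inner5, sum5; field|].
    rewrite K3, exp_2u_scale. frame_inner_simpl. unfold E; ring. }
  rewrite K1 in R1, R2. rewrite K2 in I1, I2.
  repeat split; lra.
Qed.

Lemma normal_parallel :
  inner5 (N2 a b) N1x = 0 /\ inner5 (N2 a b) N1y = 0.
Proof.
  assert (Hw : HasDzV N1 a b (fun i => mkC ((N1x i + 0) / 2) ((0 - N1y i) / 2))).
  { intros i Hi. apply HasDz_intro; [exact (HN1x i Hi)|exact (HN1y i Hi)|exact (dpl_const 0 a)|exact (dpl_const 0 b)]. }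
  pose proof (Hpar a b Hab _ Hw) as P. rewrite cinner_VtoC in P.
  pose proof (f_equal cre P) as Pr. pose proof (f_equal cim P) as Pi. simpl in Pr, Pi.
  rewrite !(inner5_sym (N2 a b)).
  unfold inner5, sum5 in *. split; lra.
Qed.

Lemma frame_tangent_partials :
  let k := / (2 * scale a b) in
  DxV F1 a b (fun i => k * fxx i + - ux a b * F1 a b i) /\
  DyV F1 a b (fun i => k * fxy i + - uy a b * F1 a b i) /\
  DxV F2 a b (fun i => k * fxy i + - ux a b * F2 a b i) /\
  DyV F2 a b (fun i => k * fyy i + - uy a b * F2 a b i).
Proof.
  intros k.
  destruct (inv_scale_partials a b Hab) as [Kx Ky].
  assert (E1 : forall i, (i < 5)%nat -> forall a b, U a b ->
                 / (2 * scale a b) * fx a b i = F1 a b i)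
    by (intros; symmetry; apply F1_F2_fx_fy; auto).
  assert (E2 : forall i, (i < 5)%nat -> forall a b, U a b ->
                 / (2 * scale a b) * fy a b i = F2 a b i)
    by (intros; symmetry; apply F1_F2_fx_fy; auto).
  unfold DxV, DyV in *. repeat split; intros i Hi.
  - apply (Dx_local U HU (fun a b => / (2 * scale a b) * fx a b i)); auto.
    unfold Dx, Dy in *. eapply dpl_eq; [apply dpl_mult; [exact Kx|exact (Hxx i Hi)]|].
    rewrite <- (E1 i Hi a b Hab). cbv beta. unfold k. ring.
  - apply (Dy_local U HU (fun a b => / (2 * scale a b) * fx a b i)); auto.
    unfold Dx, Dy in *. eapply dpl_eq; [apply dpl_mult; [exact Ky|exact (Hxy i Hi)]|].
    rewrite <- (E1 i Hi a b Hab). cbv beta. unfold k. ring.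
  - apply (Dx_local U HU (fun a b => / (2 * scale a b) * fy a b i)); auto.
    unfold Dx, Dy in *. eapply dpl_eq; [apply dpl_mult; [exact Kx|exact (Hyx i Hi)]|].
    rewrite <- (E2 i Hi a b Hab). cbv beta. unfold k. ring.
  - apply (Dy_local U HU (fun a b => / (2 * scale a b) * fy a b i)); auto.
    unfold Dx, Dy in *. eapply dpl_eq; [apply dpl_mult; [exact Ky|exact (Hyy i Hi)]|].
    rewrite <- (E2 i Hi a b Hab). cbv beta. unfold k. ring.
Qed.

Ltac frame_columns a b :=
  change (fun m => Fmat f F1 F2 N1 N2 a b m 0%nat) with (f a b) in *;
  change (fun m => Fmat f F1 F2 N1 N2 a b m 1%nat) with (F1 a b) in *;
  change (fun m => Fmat f F1 F2 N1 N2 a b m 2%nat) with (F2 a b) in *;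
  change (fun m => Fmat f F1 F2 N1 N2 a b m 3%nat) with (N1 a b) in *;
  change (fun m => Fmat f F1 F2 N1 N2 a b m 4%nat) with (N2 a b) in *.

Lemma structure_equation_x : forall i j, (i < 5)%nat -> (j < 5)%nat ->
  Dx (fun a b => Fmat f F1 F2 N1 N2 a b i j) a b
     (sum5 (fun k => Fmat f F1 F2 N1 N2 a b i k * alpha_x (Afield 0 c u h uz xi a b) k j)).
Proof.
  destruct (f_partials a b Hab) as [Hfx _].
  destruct frame_tangent_partials as [T1x [_ [T2x _]]].
  destruct f_second_metric as [M1 _].
  destruct second_fundamental_form as [S1 [S2 [_ [S4 [S5 _]]]]].
  destruct normal_parallel as [P1 _].
  pose proof (scale_pos a b).
  destruct (openU_line_x U HU a b Hab) as [r [Hr Hline]].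
  apply (frame_derivative (fun s => Fmat f F1 F2 N1 N2 s b)
    (fun j => match j with
              | O => fx a b | S O => fun i => / (2 * scale a b) * fxx i + - ux a b * F1 a b i
              | S (S O) => fun i => / (2 * scale a b) * fxy i + - ux a b * F2 a b i
              | S (S (S O)) => N1x | _ => N2x end) _ a r Hr).
  - intros s Hs. apply frame_gram, Hline, Hs.
  - intros i j Hi Hj. revert j Hj.
    apply fin5_ind; [apply Hfx|apply T1x|apply T2x|apply HN1x|apply HN2x]; auto.
  - apply Amat_so41.
  - intros k l Hkl.
    destruct k as [|[|[|[|[|k]]]]]; destruct l as [|[|[|[|[|l]]]]]; try lia.
    all: unfold connection, alpha_x, Afield; cbv beta; rewrite Amat_AmatE;
         change (exp (u a b) / sqrt 2) with (scale a b).
    all: frame_columns a b; unfold AmatE, eta; simpl.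
    all: rewrite ?inner5_comb_r, ?(proj1 (inner5_fx_fy a b _ Hab)), ?Rdiv_0_l.
    all: frame_inner_simpl; rewrite ?M1, ?S1, ?S2, ?S4, ?S5, ?P1.
    all: unfold ux, uy; field; lra.
Qed.

Lemma structure_equation_y : forall i j, (i < 5)%nat -> (j < 5)%nat ->
  Dy (fun a b => Fmat f F1 F2 N1 N2 a b i j) a b
     (sum5 (fun k => Fmat f F1 F2 N1 N2 a b i k * alpha_y (Afield 0 c u h uz xi a b) k j)).
Proof.
  destruct (f_partials a b Hab) as [_ Hfy].
  destruct frame_tangent_partials as [_ [T1y [_ T2y]]].
  destruct f_second_metric as [_ M2].
  destruct second_fundamental_form as [_ [S2 [S3 [_ [S5 S6]]]]].
  destruct normal_parallel as [_ P2].
  pose proof (scale_pos a b).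
  destruct (openU_line_y U HU a b Hab) as [r [Hr Hline]].
  apply (frame_derivative (fun s => Fmat f F1 F2 N1 N2 a s)
    (fun j => match j with
              | O => fy a b | S O => fun i => / (2 * scale a b) * fxy i + - uy a b * F1 a b i
              | S (S O) => fun i => / (2 * scale a b) * fyy i + - uy a b * F2 a b i
              | S (S (S O)) => N1y | _ => N2y end) _ b r Hr).
  - intros s Hs. apply frame_gram, Hline, Hs.
  - intros i j Hi Hj. revert j Hj.
    apply fin5_ind; [apply Hfy|apply T1y|apply T2y|apply HN1y|apply HN2y]; auto.
  - apply Amat_so41.
  - intros k l Hkl.
    destruct k as [|[|[|[|[|k]]]]]; destruct l as [|[|[|[|[|l]]]]]; try lia.
    all: unfold connection, alpha_y, Afield; cbv beta; rewrite Amat_AmatE;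
         change (exp (u a b) / sqrt 2) with (scale a b).
    all: frame_columns a b; unfold AmatE, eta; simpl.
    all: rewrite ?inner5_comb_r, ?(proj2 (inner5_fx_fy a b _ Hab)), ?Rdiv_0_l.
    all: frame_inner_simpl; rewrite ?M2, ?S2, ?S3, ?S5, ?S6, ?P2.
    all: unfold ux, uy; field; lra.
Qed.
End AtPoint.

Lemma structure_equations (a b : R) : U a b -> forall i j, (i < 5)%nat -> (j < 5)%nat ->
  Dx (fun a b => Fmat f F1 F2 N1 N2 a b i j) a b
     (sum5 (fun k => Fmat f F1 F2 N1 N2 a b i k * alpha_x (Afield 0 c u h uz xi a b) k j)) /\
  Dy (fun a b => Fmat f F1 F2 N1 N2 a b i j) a b
     (sum5 (fun k => Fmat f F1 F2 N1 N2 a b i k * alpha_y (Afield 0 c u h uz xi a b) k j)).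
Proof.
  intros Hab.
  destruct (f_second_partials a b Hab) as [fxx [fxy [fyy [Hxx [Hxy [Hyx Hyy]]]]]].
  destruct (smooth_vector_partials U N1 a b HU Hab (fun i Hi => proj1 (proj2 (Hreg i Hi))))
    as [N1x [N1y [HN1x HN1y]]].
  destruct (smooth_vector_partials U N2 a b HU Hab (fun i Hi => proj2 (proj2 (Hreg i Hi))))
    as [N2x [N2y [HN2x HN2y]]].
  intros i j Hi Hj. split.
  - eapply structure_equation_x; eauto.
  - eapply structure_equation_y; eauto.
Qed.

Lemma frame_mixed_partials_commute (x y : R) : U x y -> forall i j, (i < 5)%nat -> (j < 5)%nat ->
  mixed_partials_commute U (fun a b => Fmat f F1 F2 N1 N2 a b i j) x y.
Proof.
  intros Hxy i j Hi Hj.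
  destruct (f_component_partials i Hi) as [gx [gy [gxy [S [Sx [Sy E]]]]]].
  destruct (smooth_second_partials U HU u Hu) as [ux' [uy' [uxy' [Su _]]]].
  pose proof (second_partials_mult U _ _ _ _ _ _ _ _ (second_partials_const U (sqrt 2 / 2))
                (second_partials_exp U _ _ _ _ (second_partials_opp U _ _ _ _ Su))) as Sk.
  assert (Ek : forall a b, / (2 * scale a b) = sqrt 2 / 2 * exp (- u a b)) by apply inv_scale_exp.
  revert j Hj. apply fin5_ind; cbn [Fmat].
  - exact (second_partials_commute U HU _ _ _ _ x y S Hxy).
  - destruct (smooth_second_partials U HU gx Sx) as [? [? [? Sgx]]].
    apply (mixed_partials_commute_local U HU (fun a b => sqrt 2 / 2 * exp (- u a b) * gx a b)).
    + intros a b Hab. rewrite (proj1 (E a b Hab)), <- Ek. symmetry; apply F1_F2_fx_fy; auto.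
    + exact (second_partials_commute U HU _ _ _ _ x y (second_partials_mult U _ _ _ _ _ _ _ _ Sk (proj1 Sgx)) Hxy).
  - destruct (smooth_second_partials U HU gy Sy) as [? [? [? Sgy]]].
    apply (mixed_partials_commute_local U HU (fun a b => sqrt 2 / 2 * exp (- u a b) * gy a b)).
    + intros a b Hab. rewrite (proj2 (E a b Hab)), <- Ek. symmetry; apply F1_F2_fx_fy; auto.
    + exact (second_partials_commute U HU _ _ _ _ x y (second_partials_mult U _ _ _ _ _ _ _ _ Sk (proj1 Sgy)) Hxy).
  - destruct (smooth_second_partials U HU _ (proj1 (proj2 (Hreg i Hi)))) as [? [? [? [S3 _]]]].
    exact (second_partials_commute U HU _ _ _ _ x y S3 Hxy).
  - destruct (smooth_second_partials U HU _ (proj2 (proj2 (Hreg i Hi)))) as [? [? [? [S4 _]]]].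
    exact (second_partials_commute U HU _ _ _ _ x y S4 Hxy).
Qed.

Lemma uz_partials (x y : R) : U x y -> exists rx ry ix iy,
  Dx (fun a b => cre (uz a b)) x y rx /\ Dy (fun a b => cre (uz a b)) x y ry /\
  Dx (fun a b => cim (uz a b)) x y ix /\ Dy (fun a b => cim (uz a b)) x y iy.
Proof.
  intros Hxy.
  destruct (smooth_partials U HU u Hu) as [gx [gy [Hg [Sx Sy]]]].
  assert (Cuz : forall a b, U a b -> cre (uz a b) = gx a b / 2 /\ cim (uz a b) = - (gy a b / 2)).
  { intros a b Hab. destruct (u_partials a b Hab) as [Hx Hy]. destruct (Hg a b Hab) as [Gx Gy].
    rewrite (uniqueness_limite (fun s => u s b) a _ _ Gx Hx),
            (uniqueness_limite (fun s => u a s) b _ _ Gy Hy).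
    unfold ux, uy; split; field. }
  destruct (smooth_partials U HU gx Sx) as [gxx [gxy [Hgx _]]].
  destruct (smooth_partials U HU gy Sy) as [gyx [gyy [Hgy _]]].
  destruct (Hgx x y Hxy) as [D1 D2]. destruct (Hgy x y Hxy) as [D3 D4].
  exists (gxx x y / 2), (gxy x y / 2), (- (gyx x y / 2)), (- (gyy x y / 2)).
  repeat split;
    [apply (Dx_local U HU (fun a b => gx a b / 2))|apply (Dy_local U HU (fun a b => gx a b / 2))
    |apply (Dx_local U HU (fun a b => - (gy a b / 2)))|apply (Dy_local U HU (fun a b => - (gy a b / 2)))];
    auto; try (intros; symmetry; apply Cuz; auto); unfold Dx, Dy in *; derive_eq.
Qed.

Lemma Afield_partials (t x y : R) : U x y -> forall k j, (k < 5)%nat -> (j < 5)%nat ->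
  exists rx ry ix iy,
    Dx (fun a b => cre (Afield t c u h uz xi a b k j)) x y rx /\
    Dy (fun a b => cre (Afield t c u h uz xi a b k j)) x y ry /\
    Dx (fun a b => cim (Afield t c u h uz xi a b k j)) x y ix /\
    Dy (fun a b => cim (Afield t c u h uz xi a b k j)) x y iy.
Proof.
  intros Hxy.
  destruct (u_partials x y Hxy) as [du1 du2].
  destruct (uz_partials x y Hxy) as [? [? [? [? [dz1 [dz2 [dz3 dz4]]]]]]].
  destruct (smooth_partials U HU h Hh) as [hx [hy [Hhd _]]].
  destruct (smooth_partials U HU _ Hxr) as [rx [ry [Hr _]]].
  destruct (smooth_partials U HU _ Hxim) as [ix [iy [Hi _]]].
  destruct (Hhd x y Hxy) as [dh1 dh2]. destruct (Hr x y Hxy) as [dr1 dr2].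
  destruct (Hi x y Hxy) as [di1 di2].
  unfold Dx, Dy in *.
  intros k j Hk Hj. revert k Hk. apply fin5_ind; revert j Hj; apply fin5_ind.
  all: unfold Afield, Amat; cbn [cre cim Cscal Cadd Csub Copp Cmul RtoC Ci C0].
  all: do 4 eexists; split; [derive|split; [derive|split; derive]].
Qed.

Lemma frame_dz_mul_A0 (x y : R) : U x y -> forall i j, (i < 5)%nat -> (j < 5)%nat ->
  exists w, HasDz (fun a b => RtoC (Fmat f F1 F2 N1 N2 a b i j)) x y w /\
    w = Csum5 (fun k => Cmul (RtoC (Fmat f F1 F2 N1 N2 x y i k)) (Afield 0 c u h uz xi x y k j)).
Proof.
  intros Hxy i j Hi Hj. destruct (structure_equations x y Hxy i j Hi Hj) as [Sx Sy].
  eexists. split; [apply HasDz_intro; [exact Sx|exact Sy|exact (dpl_const 0 x)|exact (dpl_const 0 y)]|].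
  unfold Csum5, sum5, alpha_x, alpha_y, Cmul, Cadd, RtoC. simpl. f_equal; field.
Qed.

Lemma mc_defect_Afield0 (x y : R) : U x y -> exists Ry0 Ix0 : nat -> nat -> R,
  (forall k j, (k < 5)%nat -> (j < 5)%nat ->
     Dy (fun a b => cre (Afield 0 c u h uz xi a b k j)) x y (Ry0 k j) /\
     Dx (fun a b => cim (Afield 0 c u h uz xi a b k j)) x y (Ix0 k j)) /\
  forall i j, (i < 5)%nat -> (j < 5)%nat ->
    mc_defect (alpha_x (Afield 0 c u h uz xi x y)) (alpha_y (Afield 0 c u h uz xi x y))
              (fun k l => 2 * Ry0 k l) (fun k l => - (2 * Ix0 k l)) i j = 0.
Proof.
  intros Hxy.
  assert (ERy : forall k j, (k < 5)%nat -> (j < 5)%nat ->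
            exists l, Dy (fun a b => cre (Afield 0 c u h uz xi a b k j)) x y l)
    by (intros k j Hk Hj; destruct (Afield_partials 0 x y Hxy k j Hk Hj) as [? [l [? [? [_ [H _]]]]]]; eauto).
  assert (EIx : forall k j, (k < 5)%nat -> (j < 5)%nat ->
            exists l, Dx (fun a b => cim (Afield 0 c u h uz xi a b k j)) x y l)
    by (intros k j Hk Hj; destruct (Afield_partials 0 x y Hxy k j Hk Hj) as [? [? [l [? [_ [_ [H _]]]]]]]; eauto).
  destruct (choice5x5 _ ERy) as [Ry0 HRy]. destruct (choice5x5 _ EIx) as [Ix0 HIx].
  exists Ry0, Ix0. split; [intros; split; [apply HRy|apply HIx]; auto|].
  apply (structure_equations_integrable U (Fmat f F1 F2 N1 N2)
           (fun a b => alpha_x (Afield 0 c u h uz xi a b)) (fun a b => alpha_y (Afield 0 c u h uz xi a b))).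
  - exact Hxy.
  - exact structure_equations.
  - intros k l Hk Hl. pose proof (HRy k l Hk Hl). pose proof (HIx k l Hk Hl).
    unfold alpha_x, alpha_y, Dx, Dy in *. split; derive_eq.
  - apply frame_mixed_partials_commute, Hxy.
  - apply frame_gram, Hxy.
Qed.

Lemma Afield_shift_partials (t x y : R) (i j : nat) (rx ry ix iy : R) : U x y ->
  Dx (fun a b => cre (Afield 0 c u h uz xi a b i j)) x y rx ->
  Dy (fun a b => cre (Afield 0 c u h uz xi a b i j)) x y ry ->
  Dx (fun a b => cim (Afield 0 c u h uz xi a b i j)) x y ix ->
  Dy (fun a b => cim (Afield 0 c u h uz xi a b i j)) x y iy ->
  let kt := t / (2 * c) in
  Dx (fun a b => cre (Afield t c u h uz xi a b i j)) x y (rx + kt * (scale x y * ux x y) * deform_x i j / 2) /\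
  Dy (fun a b => cre (Afield t c u h uz xi a b i j)) x y (ry + kt * (scale x y * uy x y) * deform_x i j / 2) /\
  Dx (fun a b => cim (Afield t c u h uz xi a b i j)) x y (ix - kt * (scale x y * ux x y) * deform_y i j / 2) /\
  Dy (fun a b => cim (Afield t c u h uz xi a b i j)) x y (iy - kt * (scale x y * uy x y) * deform_y i j / 2).
Proof.
  intros Hxy Hrx Hry Hix Hiy kt.
  destruct (scale_partials x y Hxy) as [Sx Sy].
  assert (Shift : forall a b, cre (Afield t c u h uz xi a b i j) =
                                cre (Afield 0 c u h uz xi a b i j) + kt * scale a b * deform_x i j / 2 /\
                              cim (Afield t c u h uz xi a b i j) =
                                cim (Afield 0 c u h uz xi a b i j) - kt * scale a b * deform_y i j / 2)
    by (intros; apply Amat_shift).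
  unfold Dx, Dy in *.
  repeat split; (eapply dpl_local; [exact Rlt_0_1|intros s _; symmetry; apply Shift|derive_eq]).
Qed.

Lemma maurer_cartan (t x y : R) : U x y -> forall i j, (i < 5)%nat -> (j < 5)%nat ->
  exists w1 w2,
    HasDz (fun a b => Cconj (Afield t c u h uz xi a b i j)) x y w1 /\
    HasDzb (fun a b => Afield t c u h uz xi a b i j) x y w2 /\
    Cadd (Csub w1 w2) (commAAbar (Afield t c u h uz xi x y) i j) = C0.
Proof.
  intros Hxy i j Hi Hj.
  destruct (mc_defect_Afield0 x y Hxy) as [Ry0 [Ix0 [HD Flat0]]].
  destruct (HD i j Hi Hj) as [Hry Hix].
  destruct (Afield_partials 0 x y Hxy i j Hi Hj) as [rx [_ [_ [iy [Hrx [_ [_ Hiy]]]]]]].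
  destruct (Afield_shift_partials t x y i j _ _ _ _ Hxy Hrx Hry Hix Hiy) as [D1 [D2 [D3 D4]]].
  eexists; eexists. split; [|split].
  - apply HasDz_intro; [exact D1|exact D2|apply dpl_opp, D3|apply dpl_opp, D4].
  - apply HasDzb_intro; [exact D1|exact D2|exact D3|exact D4].
  - rewrite complex_mc_defect. unfold C0. f_equal.
    set (kt := t / (2 * c)) in *.
    transitivity (mc_defect (alpha_x (Amat t c (u x y) (h x y) (uz x y) (xi x y)))
                            (alpha_y (Amat t c (u x y) (h x y) (uz x y) (xi x y)))
      (fun k l => 2 * Ry0 k l + kt * (scale x y * - (2 * cim (uz x y))) * deform_x k l)
      (fun k l => - (2 * Ix0 k l) + kt * (scale x y * (2 * cre (uz x y))) * deform_y k l) i j / 2).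
    + unfold mc_defect, ux, uy, Afield. field.
    + unfold kt, scale.
      rewrite (mc_defect_Amat_shift t c (u x y) (h x y) (uz x y) (xi x y)) by auto.
      pose proof (Flat0 i j Hi Hj) as F0. unfold Afield in F0. rewrite F0. field.
Qed.
End Surface.

Theorem mainTheorem16
  (U : R -> R -> Prop)
  (f F1 F2 N1 N2 : R -> R -> VR) (u h : R -> R -> R) (xi : R -> R -> Cx) (c : R)
  (fz : R -> R -> VC) (uz : R -> R -> Cx) :
  openU U ->
  (forall i, (i < 5)%nat ->
     smooth U (fun x y => f x y i) /\ smooth U (fun x y => N1 x y i) /\
     smooth U (fun x y => N2 x y i)) ->
  smooth U u -> smooth U h ->
  smooth U (fun x y => cre (xi x y)) -> smooth U (fun x y => cim (xi x y)) ->
  (forall x y, U x y -> inner5 (f x y) (f x y) = 1) ->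
  (forall x y, U x y -> HasDzV f x y (fz x y)) ->
  (forall x y, U x y ->
     cinner (fz x y) (fz x y) = C0 /\
     cinner (fz x y) (Vconj (fz x y)) = RtoC (exp (2 * u x y))) ->
  (forall x y, U x y -> forall i, (i < 5)%nat ->
     fz x y i = Cscal (exp (u x y) / sqrt 2) (mkC (F1 x y i) (- F2 x y i))) ->
  (forall x y, U x y ->
     inner5 (N1 x y) (N1 x y) = 1 /\ inner5 (N2 x y) (N2 x y) = -1 /\
     inner5 (N1 x y) (N2 x y) = 0 /\
     inner5 (N1 x y) (f x y) = 0 /\ inner5 (N2 x y) (f x y) = 0 /\
     inner5 (N1 x y) (F1 x y) = 0 /\ inner5 (N1 x y) (F2 x y) = 0 /\
     inner5 (N2 x y) (F1 x y) = 0 /\ inner5 (N2 x y) (F2 x y) = 0 /\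
     - N2 x y 4%nat < 0) ->
  (forall x y, U x y -> SOp41 (Fmat f F1 F2 N1 N2 x y)) ->
  (forall x y, U x y -> forall w, HasDzV N1 x y w -> cinner w (VtoC (N2 x y)) = C0) ->
  c <> 0 ->
  (forall x y, U x y -> forall w, HasDzCV fz x y w ->
     cinner w (VtoC (N1 x y)) = Cadd (xi x y) (RtoC c) /\
     Copp (cinner w (VtoC (N2 x y))) = xi x y) ->
  (forall x y, U x y -> forall w, HasDzbCV fz x y w -> forall i, (i < 5)%nat ->
     w i = RtoC (exp (2 * u x y) * (- f x y i + h x y * (N1 x y i + N2 x y i)))) ->
  (forall x y, U x y ->
     Csub (Cmul (Cadd (xi x y) (RtoC c)) (Cadd (xi x y) (RtoC c)))
          (Cmul (xi x y) (xi x y)) <> C0) ->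
  (forall x y, U x y -> HasDz (fun a b => RtoC (u a b)) x y (uz x y)) ->
  forall t : R, forall x y, U x y ->
    (is_so41 (alpha_x (Afield t c u h uz xi x y)) /\
     is_so41 (alpha_y (Afield t c u h uz xi x y))) /\
    (t = 0 -> forall i j, (i < 5)%nat -> (j < 5)%nat ->
       exists w, HasDz (fun a b => RtoC (Fmat f F1 F2 N1 N2 a b i j)) x y w /\
         w = Csum5 (fun k => Cmul (RtoC (Fmat f F1 F2 N1 N2 x y i k))
                                  (Afield 0 c u h uz xi x y k j))) /\
    (forall i j, (i < 5)%nat -> (j < 5)%nat ->
       exists w1 w2,
         HasDz (fun a b => Cconj (Afield t c u h uz xi a b i j)) x y w1 /\
         HasDzb (fun a b => Afield t c u h uz xi a b i j) x y w2 /\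
         Cadd (Csub w1 w2) (commAAbar (Afield t c u h uz xi x y) i j) = C0).
Proof.
  (* The normalisations of f, N1, N2 are part of [SOp41]. *)
  intros HU Hreg Hu Hh Hxr Hxim _ Hfz _ HF12 _ HSO Hpar _ Hxi Hzzb _ Huz t x y Hxy.
  split; [|split].
  - apply Amat_so41.
  - intros _. eapply frame_dz_mul_A0; eauto.
  - eapply maurer_cartan; eauto.
Qed.
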